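(* Let $X$ be a Banach space, $\Omega\in L(X)$ an isomorphism of $X$ onto itself, $\tau>0$ and $\varphi\in C^{2}([-2\tau,0],X)$. Then the unique classical solution of $$\ddot x(t)-\Omega^{2}x(t-2\tau)=0\ (t\ge0),\qquad x(t)=\varphi(t)\ (t\in[-2\tau,0])$$ is given for $t\in[-2\tau,\infty)$ by $$x(t)=x_1(t+\tau;\Omega)\varphi(-2\tau)+x_2(t+2\tau;\Omega)\dot\varphi(-2\tau)+\int_{-2\tau}^{0}x_2(t-s;\Omega)\ddot\varphi(s)\,ds.$$
   Context: For $A\in L(X)$, $\exp_\tau(t;A)=0$ for $t<-\tau$, $=\mathrm{id}_X$ for $-\tau\le t<0$, and $=\sum_{j=0}^{k}A^{j}\frac{(t-(j-1)\tau)^{j}}{j!}$ for $(k-1)\tau\le t<k\tau$, $k\in\mathbb N$. For $t\in\mathbb R$, $x_1(t;\Omega):=\tfrac12(\exp_\tau(t;\Omega)+\exp_\tau(t;-\Omega))$ and $x_2(t;\Omega):=\tfrac12\Omega^{-1}(\exp_\tau(t;\Omega)-\exp_\tau(t;-\Omega))$; in particular $x_2(t;\Omega)=0$ for all $t<0$ and $x_1(t;\Omega)=0$ for $t<-\tau$. A classical solution of $\ddot x(t)-\Omega^2x(t-2\tau)=f(t)$ ($t\ge0$), $x=\varphi$ on $[-2\tau,0]$, is a function $x\in C^{1}([-2\tau,\infty),X)\cap C^{2}([-2\tau,0],X)\cap C^{2}([0,\infty),X)$ (one-sided derivatives at endpoints) satisfying these equations pointwise. *)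

From Stdlib Require Import Reals Lra ZArith.
Open Scope R_scope.

Record NormedSpace := mkNormedSpace {
  ns_car :> Type;
  ns_zero : ns_car;
  ns_add : ns_car -> ns_car -> ns_car;
  ns_opp : ns_car -> ns_car;
  ns_scal : R -> ns_car -> ns_car;
  ns_norm : ns_car -> R;
  ns_add_assoc : forall u v w, ns_add u (ns_add v w) = ns_add (ns_add u v) w;
  ns_add_comm : forall u v, ns_add u v = ns_add v u;
  ns_add_zero : forall u, ns_add u ns_zero = u;
  ns_add_opp : forall u, ns_add u (ns_opp u) = ns_zero;
  ns_scal_assoc : forall a b u, ns_scal a (ns_scal b u) = ns_scal (a * b) u;
  ns_scal_one : forall u, ns_scal 1 u = u;
  ns_scal_distr_l : forall a u v, ns_scal a (ns_add u v) = ns_add (ns_scal a u) (ns_scal a v);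
  ns_scal_distr_r : forall a b u, ns_scal (a + b) u = ns_add (ns_scal a u) (ns_scal b u);
  ns_norm_zero_iff : forall u, ns_norm u = 0 <-> u = ns_zero;
  ns_norm_triangle : forall u v, ns_norm (ns_add u v) <= ns_norm u + ns_norm v;
  ns_norm_scal : forall a u, ns_norm (ns_scal a u) = Rabs a * ns_norm u
}.

Arguments ns_zero {_}.
Arguments ns_add {_}.
Arguments ns_opp {_}.
Arguments ns_scal {_}.
Arguments ns_norm {_}.

Definition ns_sub {X : NormedSpace} (u v : X) : X := ns_add u (ns_opp v).

Definition complete (X : NormedSpace) : Prop :=
  forall u : nat -> X,
    (forall eps, eps > 0 -> exists N, forall m n, (m >= N)%nat -> (n >= N)%nat ->
        ns_norm (ns_sub (u m) (u n)) < eps) ->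
    exists l : X, forall eps, eps > 0 -> exists N, forall n, (n >= N)%nat ->
        ns_norm (ns_sub (u n) l) < eps.

Definition is_linear {X : NormedSpace} (A : X -> X) : Prop :=
  (forall u v, A (ns_add u v) = ns_add (A u) (A v)) /\
  (forall a u, A (ns_scal a u) = ns_scal a (A u)).

Definition is_bounded_op {X : NormedSpace} (A : X -> X) : Prop :=
  exists M, forall v, ns_norm (A v) <= M * ns_norm v.

Definition in_LX {X : NormedSpace} (A : X -> X) : Prop :=
  is_linear A /\ is_bounded_op A.

Definition is_isomorphism {X : NormedSpace} (O Oinv : X -> X) : Prop :=
  in_LX O /\ in_LX Oinv /\ (forall v, Oinv (O v) = v) /\ (forall v, O (Oinv v) = v).

Definition has_deriv_within {X : NormedSpace} (D : R -> Prop) (f : R -> X) (t : R) (v : X) : Prop :=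
  forall eps, eps > 0 -> exists delta, delta > 0 /\
    forall h, h <> 0 -> Rabs h < delta -> D (t + h) ->
      ns_norm (ns_sub (ns_sub (f (t + h)) (f t)) (ns_scal h v)) <= eps * Rabs h.

Definition continuous_on {X : NormedSpace} (D : R -> Prop) (f : R -> X) : Prop :=
  forall t, D t -> forall eps, eps > 0 -> exists delta, delta > 0 /\
    forall s, D s -> Rabs (s - t) < delta -> ns_norm (ns_sub (f s) (f t)) < eps.

Definition is_C1_on {X : NormedSpace} (D : R -> Prop) (f f' : R -> X) : Prop :=
  (forall t, D t -> has_deriv_within D f t (f' t)) /\ continuous_on D f'.

Definition is_C2_on {X : NormedSpace} (D : R -> Prop) (f f' f'' : R -> X) : Prop :=
  is_C1_on D f f' /\ is_C1_on D f' f''.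

Fixpoint vsum {X : NormedSpace} (f : nat -> X) (k : nat) : X :=
  match k with
  | O => f O
  | S k' => ns_add (vsum f k') (f (S k'))
  end.

Definition is_RInt {X : NormedSpace} (f : R -> X) (a b : R) (I : X) : Prop :=
  forall eps, eps > 0 -> exists delta, delta > 0 /\
    forall (n : nat) (p xi : nat -> R),
      p O = a -> p n = b ->
      (forall i, (i < n)%nat -> p i <= xi i <= p (S i) /\ p (S i) - p i < delta) ->
      ns_norm (ns_sub
        (vsum (fun i => ns_scal (p (S i) - p i) (f (xi i))) (pred n)) I) < eps.

Fixpoint opow {X : NormedSpace} (A : X -> X) (j : nat) (v : X) : X :=
  match j with
  | O => v
  | S j' => A (opow A j' v)
  end.

(* Delayed exponential exp_tau(t; A), applied to a vector v.
   For t >= 0 the k with (k-1)tau <= t < k tau is k = up (t/tau). *)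
Definition exp_tau {X : NormedSpace} (tau : R) (A : X -> X) (t : R) (v : X) : X :=
  if Rlt_dec t (- tau) then ns_zero
  else if Rlt_dec t 0 then v
  else vsum (fun j => ns_scal ((t - (INR j - 1) * tau) ^ j / INR (fact j)) (opow A j v))
            (Z.to_nat (up (t / tau))).

Definition x1 {X : NormedSpace} (tau : R) (O : X -> X) (t : R) (v : X) : X :=
  ns_scal (1/2) (ns_add (exp_tau tau O t v) (exp_tau tau (fun w => ns_opp (O w)) t v)).

Definition x2 {X : NormedSpace} (tau : R) (O Oinv : X -> X) (t : R) (v : X) : X :=
  ns_scal (1/2) (Oinv (ns_sub (exp_tau tau O t v) (exp_tau tau (fun w => ns_opp (O w)) t v))).

Definition classical_solution {X : NormedSpace} (tau : R) (O : X -> X) (f phi x : R -> X) : Prop :=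
  exists xd xdd_neg xdd_pos : R -> X,
    is_C1_on (fun t => - (2 * tau) <= t) x xd /\
    is_C2_on (fun t => - (2 * tau) <= t <= 0) x xd xdd_neg /\
    is_C2_on (fun t => 0 <= t) x xd xdd_pos /\
    (forall t, 0 <= t -> ns_sub (xdd_pos t) (O (O (x (t - 2 * tau)))) = f t) /\
    (forall t, - (2 * tau) <= t <= 0 -> x t = phi t).

From Stdlib Require Import Reals Lra Lia List Classical ClassicalEpsilon ZArith.
Open Scope R_scope.

(* The equation is solved by the method of steps.  Let Φ_k (k ≥ 3) be the
   (k-2)-fold primitive of φ on [-2τ, 0] vanishing at -2τ, with Φ_2 = φ,
   Φ_1 = φ', Φ_0 = φ'', and let ψ_k extend Φ_k by 0 to the left of -2τ and by
   its Taylor polynomial at 0 to the right; then ψ_k' = ψ_(k-1) on [-2τ, ∞),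
   and on all of ℝ as soon as k ≥ 4.  The solution is the locally finite sum
   x(t) = Σ_m Ω^(2m) ψ_(2m+2)(t - 2mτ): on [-2τ, 0] only the term φ survives,
   and for t ≥ 0 the second derivative of the m-th term is Ω² times the
   (m-1)-st term shifted by 2τ.  Uniqueness follows by stepping through
   intervals of length 2τ.  The m-th terms of x1 and x2 are truncated powers
   (u - c)₊^j / j!, so the representation formula is Taylor's formula with
   integral remainder for ψ_(2m+2), obtained from an explicit primitive of
   s ↦ x2(t - s) φ''(s). *)

Arguments ns_add_assoc {_}. Arguments ns_add_comm {_}. Arguments ns_add_zero {_}.
Arguments ns_add_opp {_}. Arguments ns_scal_assoc {_}. Arguments ns_scal_one {_}.
Arguments ns_scal_distr_l {_}. Arguments ns_scal_distr_r {_}. Arguments ns_norm_zero_iff {_}.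
Arguments ns_norm_triangle {_}. Arguments ns_norm_scal {_}.

(** * Vector algebra *)

Section VectorAlgebra.
Context {X : NormedSpace}.
Implicit Types u v w a b c d : X.

Lemma vadd0l u : ns_add ns_zero u = u.
Proof. rewrite ns_add_comm; apply ns_add_zero. Qed.

Lemma vadd_opp_l u : ns_add (ns_opp u) u = ns_zero.
Proof. rewrite ns_add_comm. apply ns_add_opp. Qed.

Lemma vadd_cancel_l a b c : ns_add a b = ns_add a c -> b = c.
Proof.
  intros H.
  assert (H2 : ns_add (ns_opp a) (ns_add a b) = ns_add (ns_opp a) (ns_add a c)) by now rewrite H.
  now rewrite !ns_add_assoc, vadd_opp_l, !vadd0l in H2.
Qed.

Lemma vscal0 u : ns_scal 0 u = ns_zero.
Proof.
  apply (vadd_cancel_l (ns_scal 0 u)).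
  rewrite ns_add_zero, <- ns_scal_distr_r. f_equal; ring.
Qed.

Lemma vopp_scal u : ns_opp u = ns_scal (-1) u.
Proof.
  apply (vadd_cancel_l u).
  rewrite ns_add_opp. symmetry.
  transitivity (ns_add (ns_scal 1 u) (ns_scal (-1) u)); [now rewrite ns_scal_one|].
  rewrite <- ns_scal_distr_r. replace (1 + -1) with 0 by ring. now rewrite vscal0.
Qed.

Lemma vscal0r (r : R) : ns_scal r (@ns_zero X) = ns_zero.
Proof. rewrite <- (vscal0 (@ns_zero X)) at 1. rewrite ns_scal_assoc, Rmult_0_r. apply vscal0. Qed.

Lemma vnorm0 : ns_norm (@ns_zero X) = 0.
Proof. now apply ns_norm_zero_iff. Qed.

Lemma vnorm_eq0 u : ns_norm u = 0 -> u = ns_zero.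
Proof. apply ns_norm_zero_iff. Qed.

Lemma vnorm_opp u : ns_norm (ns_opp u) = ns_norm u.
Proof. rewrite vopp_scal, ns_norm_scal, (Rabs_left (-1)) by lra. ring. Qed.

Lemma vnorm_nonneg u : 0 <= ns_norm u.
Proof.
  pose proof (ns_norm_triangle u (ns_opp u)) as H.
  rewrite ns_add_opp, vnorm0, vnorm_opp in H. lra.
Qed.

Lemma vnorm_small0 u : (forall e, e > 0 -> ns_norm u <= e) -> u = ns_zero.
Proof.
  intros H. apply vnorm_eq0. pose proof (vnorm_nonneg u).
  destruct (Rle_lt_or_eq_dec 0 (ns_norm u)) as [Hl|Hl]; auto.
  specialize (H (ns_norm u / 2)). lra.
Qed.

Lemma vopp_add u v : ns_opp (ns_add u v) = ns_add (ns_opp u) (ns_opp v).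
Proof. rewrite !vopp_scal. apply ns_scal_distr_l. Qed.

Lemma vopp_opp u : ns_opp (ns_opp u) = u.
Proof. rewrite !vopp_scal, ns_scal_assoc. replace (-1 * -1) with 1 by ring. apply ns_scal_one. Qed.

Lemma vsub_self u : ns_sub u u = ns_zero.
Proof. apply ns_add_opp. Qed.

Lemma vsub0 u : ns_sub u ns_zero = u.
Proof. unfold ns_sub. rewrite vopp_scal, vscal0r. apply ns_add_zero. Qed.

Lemma vsub0l u : ns_sub ns_zero u = ns_opp u.
Proof. apply vadd0l. Qed.

Lemma vsub_add_r u v : ns_add (ns_sub u v) v = u.
Proof. unfold ns_sub. rewrite <- ns_add_assoc, vadd_opp_l. apply ns_add_zero. Qed.

Lemma vsub_eq u v : ns_sub u v = ns_zero -> u = v.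
Proof. intros H. now rewrite <- (vsub_add_r u v), H, vadd0l. Qed.

Lemma vsub_add_sub u v w : ns_add (ns_sub u v) (ns_sub v w) = ns_sub u w.
Proof. unfold ns_sub. rewrite <- ns_add_assoc, (ns_add_assoc (ns_opp v)), vadd_opp_l, vadd0l. easy. Qed.

Lemma vnorm_sub_sym u v : ns_norm (ns_sub u v) = ns_norm (ns_sub v u).
Proof.
  rewrite <- vnorm_opp. unfold ns_sub. rewrite vopp_add, vopp_opp, ns_add_comm. easy.
Qed.

Lemma vnorm_sub_triangle u v w :
  ns_norm (ns_sub u w) <= ns_norm (ns_sub u v) + ns_norm (ns_sub v w).
Proof. rewrite <- (vsub_add_sub u v w). apply ns_norm_triangle. Qed.

Lemma vnorm_sub_le u v : ns_norm (ns_sub u v) <= ns_norm u + ns_norm v.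
Proof. rewrite <- (vnorm_opp v). apply ns_norm_triangle. Qed.

Lemma vadd_swap a b c d :
  ns_add (ns_add a b) (ns_add c d) = ns_add (ns_add a c) (ns_add b d).
Proof. rewrite <- !ns_add_assoc, (ns_add_assoc b), (ns_add_comm b c), <- ns_add_assoc. easy. Qed.

Lemma vsub_add_distr a b c d :
  ns_sub (ns_add a b) (ns_add c d) = ns_add (ns_sub a c) (ns_sub b d).
Proof. unfold ns_sub. rewrite vopp_add. apply vadd_swap. Qed.

Lemma vscal_sub (r : R) u v : ns_scal r (ns_sub u v) = ns_sub (ns_scal r u) (ns_scal r v).
Proof. unfold ns_sub. rewrite ns_scal_distr_l, !vopp_scal, !ns_scal_assoc, Rmult_comm. easy. Qed.

Lemma vscal_subr (r s : R) u : ns_scal (r - s) u = ns_sub (ns_scal r u) (ns_scal s u).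
Proof.
  unfold ns_sub, Rminus. rewrite ns_scal_distr_r, vopp_scal, ns_scal_assoc.
  now replace (-1 * s) with (- s) by ring.
Qed.

End VectorAlgebra.

(* Equalities in a real vector space are decided by reification to lists of
   real coefficients over the atoms; the coefficient identities go to [ring]
   or [field]. *)

Inductive vexp :=
| VAtom (n : nat) | VZero | VAdd (a b : vexp) | VOpp (a : vexp) | VSub (a b : vexp)
| VScal (r : R) (a : vexp).

Fixpoint vinterp {X : NormedSpace} (env : list X) (e : vexp) : X :=
  match e with
  | VAtom n => nth n env ns_zero
  | VZero => ns_zero
  | VAdd a b => ns_add (vinterp env a) (vinterp env b)
  | VOpp a => ns_opp (vinterp env a)
  | VSub a b => ns_sub (vinterp env a) (vinterp env b)
  | VScal r a => ns_scal r (vinterp env a)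
  end.

Fixpoint ladd (l1 l2 : list R) : list R :=
  match l1, l2 with
  | nil, _ => l2
  | _, nil => l1
  | a :: l1', b :: l2' => (a + b) :: ladd l1' l2'
  end.

Definition lscal (r : R) (l : list R) : list R := map (fun a => r * a) l.

Fixpoint lunit (n : nat) : list R :=
  match n with O => 1 :: nil | S n' => 0 :: lunit n' end.

Fixpoint vexp_coeffs (e : vexp) : list R :=
  match e with
  | VAtom n => lunit n
  | VZero => nil
  | VAdd a b => ladd (vexp_coeffs a) (vexp_coeffs b)
  | VOpp a => lscal (-1) (vexp_coeffs a)
  | VSub a b => ladd (vexp_coeffs a) (lscal (-1) (vexp_coeffs b))
  | VScal r a => lscal r (vexp_coeffs a)
  end.

Fixpoint lcomb {X : NormedSpace} (env : list X) (l : list R) : X :=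
  match l with
  | nil => ns_zero
  | c :: l' => ns_add (ns_scal c (hd ns_zero env)) (lcomb (tl env) l')
  end.

Fixpoint lzero (l : list R) : Prop :=
  match l with nil => True | a :: l' => a = 0 /\ lzero l' end.

Fixpoint leq2 (l1 l2 : list R) : Prop :=
  match l1, l2 with
  | nil, _ => lzero l2
  | a :: l1', nil => a = 0 /\ lzero l1'
  | a :: l1', b :: l2' => a = b /\ leq2 l1' l2'
  end.

Section Reification.
Context {X : NormedSpace}.

Lemma lcomb_add (env : list X) l1 l2 : lcomb env (ladd l1 l2) = ns_add (lcomb env l1) (lcomb env l2).
Proof.
  revert env l2. induction l1; intros env l2; simpl. now rewrite vadd0l.
  destruct l2; simpl. now rewrite ns_add_zero.
  rewrite IHl1, ns_scal_distr_r. apply vadd_swap.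
Qed.

Lemma lcomb_scal (env : list X) r l : lcomb env (lscal r l) = ns_scal r (lcomb env l).
Proof.
  revert env. induction l; intros env; simpl. now rewrite vscal0r.
  unfold lscal in IHl. now rewrite IHl, ns_scal_distr_l, ns_scal_assoc.
Qed.

Lemma lcomb_unit (env : list X) n : lcomb env (lunit n) = nth n env ns_zero.
Proof.
  revert env. induction n; intros env; simpl.
  - rewrite ns_scal_one, ns_add_zero. now destruct env.
  - rewrite vscal0, vadd0l, IHn. destruct env; [destruct n|]; reflexivity.
Qed.

Lemma vexp_coeffs_sound (env : list X) e : vinterp env e = lcomb env (vexp_coeffs e).
Proof.
  induction e; simpl.
  - symmetry; apply lcomb_unit.
  - reflexivity.
  - now rewrite lcomb_add, IHe1, IHe2.
  - now rewrite lcomb_scal, IHe, vopp_scal.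
  - rewrite lcomb_add, lcomb_scal, IHe1, IHe2. unfold ns_sub. now rewrite vopp_scal.
  - now rewrite lcomb_scal, IHe.
Qed.

Lemma lcomb_zero (env : list X) l : lzero l -> lcomb env l = ns_zero.
Proof.
  revert env. induction l; intros env H; simpl. reflexivity.
  destruct H as [-> H]. rewrite vscal0, vadd0l. auto.
Qed.

Lemma leq2_sound (env : list X) l1 l2 : leq2 l1 l2 -> lcomb env l1 = lcomb env l2.
Proof.
  revert env l2. induction l1; intros env l2 H.
  - symmetry. now apply lcomb_zero.
  - destruct l2; simpl in H |- *; destruct H as [-> H].
    + rewrite vscal0, vadd0l. now apply lcomb_zero.
    + f_equal. auto.
Qed.

Lemma vexp_eq (env : list X) e1 e2 :
  leq2 (vexp_coeffs e1) (vexp_coeffs e2) -> vinterp env e1 = vinterp env e2.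
Proof. intros H. rewrite !vexp_coeffs_sound. now apply leq2_sound. Qed.

End Reification.

Ltac vlookup t l :=
  match l with
  | cons t _ => constr:(O)
  | cons _ ?l' => let n := vlookup t l' in constr:(S n)
  end.

Ltac vcollect t acc :=
  match t with
  | ns_zero => acc
  | ns_add ?a ?b => let acc1 := vcollect a acc in vcollect b acc1
  | ns_opp ?a => vcollect a acc
  | ns_sub ?a ?b => let acc1 := vcollect a acc in vcollect b acc1
  | ns_scal _ ?a => vcollect a acc
  | _ => match acc with
         | context [cons t _] => acc
         | _ => constr:(app acc (cons t nil))
         end
  end.

Ltac vreify t env :=
  match t with
  | ns_zero => constr:(VZero)
  | ns_add ?a ?b => let ea := vreify a env in let eb := vreify b env in constr:(VAdd ea eb)
  | ns_opp ?a => let ea := vreify a env in constr:(VOpp ea)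
  | ns_sub ?a ?b => let ea := vreify a env in let eb := vreify b env in constr:(VSub ea eb)
  | ns_scal ?r ?a => let ea := vreify a env in constr:(VScal r ea)
  | _ => let n := vlookup t env in constr:(VAtom n)
  end.

Ltac vreduce :=
  match goal with
  | |- @eq (ns_car ?X) ?a ?b =>
    let env0 := vcollect a (@nil (ns_car X)) in
    let env1 := vcollect b env0 in
    let env := eval cbn [app] in env1 in
    let ea := vreify a env in
    let eb := vreify b env in
    change (vinterp env ea = vinterp env eb); apply vexp_eq;
    cbn [vexp_coeffs ladd lscal lunit map leq2 lzero]; repeat split
  end.

Ltac vring := vreduce; ring.
Ltac vfield := vreduce; field.

(** * Finite sums and bounded operators *)

Section Sums.
Context {X : NormedSpace}.
Implicit Types f g : nat -> X.

Lemma vsum_ext f g k : (forall i, (i <= k)%nat -> f i = g i) -> vsum f k = vsum g k.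
Proof.
  induction k; intros H; simpl. apply H; lia.
  rewrite IHk, H by first [lia | intros; apply H; lia]. reflexivity.
Qed.

Lemma vsum_add f g k : vsum (fun i => ns_add (f i) (g i)) k = ns_add (vsum f k) (vsum g k).
Proof. induction k; simpl. reflexivity. rewrite IHk. apply vadd_swap. Qed.

Lemma vsum_sub f g k : vsum (fun i => ns_sub (f i) (g i)) k = ns_sub (vsum f k) (vsum g k).
Proof. induction k; simpl. reflexivity. rewrite IHk. symmetry. apply vsub_add_distr. Qed.

Lemma vsum_scal (r : R) f k : vsum (fun i => ns_scal r (f i)) k = ns_scal r (vsum f k).
Proof. induction k; simpl. reflexivity. now rewrite IHk, ns_scal_distr_l. Qed.

Lemma vsum_scal_const (al : nat -> R) (c : X) k :
  vsum (fun i => ns_scal (al i) c) k = ns_scal (sum_f_R0 al k) c.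
Proof. induction k; simpl. reflexivity. now rewrite IHk, ns_scal_distr_r. Qed.

Lemma vsum_zero f k : (forall i, (i <= k)%nat -> f i = ns_zero) -> vsum f k = ns_zero.
Proof.
  induction k; intros H; simpl. apply H; lia.
  rewrite IHk, H by first [lia | intros; apply H; lia]. apply ns_add_zero.
Qed.

Lemma vsum_succ f k : vsum f (S k) = ns_add (vsum f k) (f (S k)).
Proof. reflexivity. Qed.

Lemma vsum_shift f k : vsum f (S k) = ns_add (f O) (vsum (fun i => f (S i)) k).
Proof.
  induction k. reflexivity.
  change (vsum f (S (S k))) with (ns_add (vsum f (S k)) (f (S (S k)))).
  rewrite IHk. simpl. now rewrite ns_add_assoc.
Qed.

Lemma vsum_extend f k N : (k <= N)%nat ->
  (forall i, (k < i)%nat -> (i <= N)%nat -> f i = ns_zero) -> vsum f N = vsum f k.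
Proof.
  intros Hk H. induction N.
  - now replace k with 0%nat by lia.
  - destruct (Nat.eq_dec k (S N)) as [->|]; [reflexivity|].
    simpl. rewrite IHN, H by (lia || (intros; apply H; lia)). apply ns_add_zero.
Qed.

Lemma vsum_pairs f M :
  vsum f (S (2 * M)) = vsum (fun m => ns_add (f (2 * m)%nat) (f (S (2 * m)))) M.
Proof.
  induction M. reflexivity.
  replace (S (2 * S M)) with (S (S (S (2 * M)))) by lia.
  change (vsum f (S (S (S (2 * M)))))
    with (ns_add (ns_add (vsum f (S (2 * M))) (f (S (S (2 * M))))) (f (S (S (S (2 * M)))))).
  rewrite IHM, <- ns_add_assoc.
  change (vsum (fun m => ns_add (f (2 * m)%nat) (f (S (2 * m)))) (S M)) with
    (ns_add (vsum (fun m => ns_add (f (2 * m)%nat) (f (S (2 * m)))) M)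
            (ns_add (f (2 * S M)%nat) (f (S (2 * S M))))).
  now replace (2 * S M)%nat with (S (S (2 * M))) by lia.
Qed.

Lemma vsum_norm f k : ns_norm (vsum f k) <= sum_f_R0 (fun i => ns_norm (f i)) k.
Proof.
  induction k; simpl. lra.
  eapply Rle_trans. apply ns_norm_triangle. lra.
Qed.

End Sums.

Section LinearOperators.
Context {X : NormedSpace}.
Implicit Types A : X -> X.

Lemma lin_add A u v : is_linear A -> A (ns_add u v) = ns_add (A u) (A v).
Proof. intros [H _]. apply H. Qed.

Lemma lin_scal A a u : is_linear A -> A (ns_scal a u) = ns_scal a (A u).
Proof. intros [_ H]. apply H. Qed.

Lemma lin_zero A : is_linear A -> A ns_zero = ns_zero.
Proof. intros HA. rewrite <- (vscal0 ns_zero) at 1. rewrite lin_scal by auto. apply vscal0. Qed.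

Lemma lin_opp A u : is_linear A -> A (ns_opp u) = ns_opp (A u).
Proof. intros HA. rewrite !vopp_scal. now apply lin_scal. Qed.

Lemma lin_sub A u v : is_linear A -> A (ns_sub u v) = ns_sub (A u) (A v).
Proof. intros HA. unfold ns_sub. now rewrite lin_add, lin_opp. Qed.

Lemma lin_vsum A (f : nat -> X) k : is_linear A -> A (vsum f k) = vsum (fun i => A (f i)) k.
Proof. intros HA. induction k; simpl. reflexivity. now rewrite lin_add, IHk. Qed.

Lemma bounded_op_nonneg A : is_bounded_op A ->
  exists M, 0 <= M /\ forall v, ns_norm (A v) <= M * ns_norm v.
Proof.
  intros [M HM]. exists (Rabs M). split. apply Rabs_pos.
  intros v. eapply Rle_trans. apply HM. apply Rmult_le_compat_r. apply vnorm_nonneg. apply RRle_abs.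
Qed.

Lemma in_LX_opow A j : in_LX A -> in_LX (opow A j).
Proof.
  intros [HL HB]. induction j as [|j [[H1 H2] H3]]; simpl.
  - split. split; reflexivity. exists 1. intros; lra.
  - split. split.
    + intros u v. rewrite H1. now apply lin_add.
    + intros a u. rewrite H2. now apply lin_scal.
    + destruct (bounded_op_nonneg _ HB) as [M [HM0 HM]], (bounded_op_nonneg _ H3) as [M' [_ HM']].
      exists (M * M'). intros v. eapply Rle_trans. apply HM.
      rewrite Rmult_assoc. now apply Rmult_le_compat_l.
Qed.

Lemma opow_opp A j v : is_linear A ->
  opow (fun w => ns_opp (A w)) j v = ns_scal ((-1) ^ j) (opow A j v).
Proof.
  intros HA. induction j; simpl. symmetry. apply ns_scal_one.
  rewrite IHj, lin_scal, vopp_scal, ns_scal_assoc by auto. f_equal; ring.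
Qed.

End LinearOperators.

(** * Differential calculus of vector-valued functions *)

Lemma real_ind (a b : R) (Q : R -> Prop) :
  a <= b -> Q a ->
  (forall r r', a <= r' <= r -> Q r -> Q r') ->
  (forall r, a <= r < b -> Q r -> exists d, d > 0 /\ Q (r + d)) ->
  (forall r, a < r <= b -> (forall r', a <= r' < r -> Q r') -> Q r) ->
  Q b.
Proof.
  intros Hab Qa Hmono Hstep Hlim.
  set (S := fun r => a <= r <= b /\ Q r).
  assert (Hb : bound S) by (exists b; intros r [[_ H] _]; exact H).
  destruct (completeness S Hb (ex_intro _ a (conj (conj (Rle_refl a) Hab) Qa))) as [c [Hub Hlub]].
  assert (Hac : a <= c) by (apply Hub; split; [lra|exact Qa]).
  assert (Hcb : c <= b) by (apply Hlub; intros r [[_ H] _]; exact H).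
  assert (Hbelow : forall r', a <= r' < c -> Q r').
  { intros r' Hr'. destruct (classic (exists s, S s /\ r' < s)) as [[s [[Hs1 Hs2] Hs3]]|Hn].
    - apply (Hmono s); auto. lra.
    - exfalso. assert (c <= r'); [|lra]. apply Hlub. intros s Hs.
      destruct (Rle_or_lt s r'); auto. exfalso; eauto. }
  assert (Qc : Q c) by (destruct (Req_dec a c); [subst; auto | apply Hlim; auto; lra]).
  destruct (Req_dec c b) as [<-|Hcb']; auto.
  exfalso. destruct (Hstep c ltac:(lra) Qc) as [d [Hd Qd]].
  assert (Hm : S (Rmin (c + d) b)).
  { split. split. apply Rmin_glb; lra. apply Rmin_r. apply (Hmono (c + d)); auto.
    split. apply Rmin_glb; lra. apply Rmin_l. }
  apply Hub in Hm. unfold Rmin in Hm. destruct (Rle_dec (c + d) b); lra.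
Qed.

Section Calculus.
Context {X : NormedSpace}.
Implicit Types (D : R -> Prop) (f g F G : R -> X).

Lemma deriv_restrict D D' f t v :
  (forall s, D' s -> D s) -> has_deriv_within D f t v -> has_deriv_within D' f t v.
Proof. intros HD H e He. destruct (H e He) as [d [Hd Hd']]. exists d. split; auto. Qed.

Lemma deriv_restrict_near D D' f t v eta :
  eta > 0 -> (forall s, D' s -> Rabs (s - t) < eta -> D s) ->
  has_deriv_within D f t v -> has_deriv_within D' f t v.
Proof.
  intros Heta HD H e He. destruct (H e He) as [d [Hd H']]. exists (Rmin d eta).
  split. now apply Rmin_glb_lt.
  intros h Hh Hhd Dh. pose proof (Rmin_l d eta). pose proof (Rmin_r d eta).
  apply H'; auto. lra. apply HD; auto. replace (t + h - t) with h by ring. lra.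
Qed.

Lemma deriv_ext_near D f g t v eta :
  eta > 0 -> (forall s, D s -> Rabs (s - t) < eta -> f s = g s) -> D t ->
  has_deriv_within D f t v -> has_deriv_within D g t v.
Proof.
  intros Heta Heq Dt H e He. destruct (H e He) as [d [Hd Hd']].
  exists (Rmin d eta). split. now apply Rmin_glb_lt.
  intros h Hh Hhd Dh. pose proof (Rmin_l d eta). pose proof (Rmin_r d eta).
  rewrite <- !Heq; auto.
  - apply Hd'; auto. lra.
  - rewrite Rminus_diag_eq, Rabs_R0 by auto. lra.
  - replace (t + h - t) with h by ring. lra.
Qed.

Lemma deriv_ext_all D f g t v :
  (forall s, f s = g s) -> has_deriv_within D f t v -> has_deriv_within D g t v.
Proof.
  intros Heq H e He. destruct (H e He) as [d [Hd H']]. exists d. split; auto.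
  intros. rewrite <- !Heq. auto.
Qed.

Lemma deriv_ext D f g t v :
  (forall s, D s -> f s = g s) -> D t -> has_deriv_within D f t v -> has_deriv_within D g t v.
Proof. intros Heq. apply (deriv_ext_near D f g t v 1); auto; lra. Qed.

Lemma deriv_glue D f t v :
  has_deriv_within (fun s => D s /\ s <= t) f t v -> has_deriv_within (fun s => D s /\ t <= s) f t v ->
  has_deriv_within D f t v.
Proof.
  intros H1 H2 e He. destruct (H1 e He) as [d1 [Hd1 H1']], (H2 e He) as [d2 [Hd2 H2']].
  exists (Rmin d1 d2). split. now apply Rmin_glb_lt.
  intros h Hh Hhd Dh. pose proof (Rmin_l d1 d2). pose proof (Rmin_r d1 d2).
  destruct (Rle_or_lt h 0); [apply H1' | apply H2']; auto; try split; auto; lra.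
Qed.

Lemma deriv_shift D D' f t a v :
  (forall s, D' s -> D (s - a)) -> has_deriv_within D f (t - a) v ->
  has_deriv_within D' (fun s => f (s - a)) t v.
Proof.
  intros HD H e He. destruct (H e He) as [d [Hd H']]. exists d. split; auto.
  intros h Hh Hhd Dh. replace (t + h - a) with (t - a + h) by ring. apply H'; auto.
  replace (t - a + h) with (t + h - a) by ring. auto.
Qed.

Lemma deriv_const D (c : X) t : has_deriv_within D (fun _ => c) t ns_zero.
Proof.
  intros e He. exists 1. split. lra. intros h _ _ _.
  rewrite vsub_self, vscal0r, vsub0, vnorm0. pose proof (Rabs_pos h). nra.
Qed.

Lemma deriv_add D f g t u v :
  has_deriv_within D f t u -> has_deriv_within D g t v ->
  has_deriv_within D (fun s => ns_add (f s) (g s)) t (ns_add u v).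
Proof.
  intros Hf Hg e He.
  destruct (Hf (e/2) ltac:(lra)) as [d1 [Hd1 H1]], (Hg (e/2) ltac:(lra)) as [d2 [Hd2 H2]].
  exists (Rmin d1 d2). split. now apply Rmin_glb_lt.
  intros h Hh Hhd Dh. pose proof (Rmin_l d1 d2). pose proof (Rmin_r d1 d2).
  rewrite vsub_add_distr, ns_scal_distr_l, vsub_add_distr.
  eapply Rle_trans. apply ns_norm_triangle.
  replace (e * Rabs h) with (e/2 * Rabs h + e/2 * Rabs h) by field.
  apply Rplus_le_compat; [apply H1 | apply H2]; auto; lra.
Qed.

Lemma deriv_lipschitz D (L : X -> X) (K : R) f t v :
  0 <= K -> (forall u w, ns_sub (L u) (L w) = L (ns_sub u w)) ->
  (forall r u, L (ns_scal r u) = ns_scal r (L u)) -> (forall u, ns_norm (L u) <= K * ns_norm u) ->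
  has_deriv_within D f t v -> has_deriv_within D (fun s => L (f s)) t (L v).
Proof.
  intros HK Hsub Hscal HL Hf e He.
  destruct (Hf (e / (K + 1)) ltac:(apply Rdiv_lt_0_compat; lra)) as [d [Hd H]].
  exists d. split; auto. intros h Hh Hhd Dh.
  rewrite <- Hscal, !Hsub. eapply Rle_trans. apply HL.
  eapply Rle_trans. apply Rmult_le_compat_l. auto. apply H; auto.
  assert (K * (e / (K + 1)) <= e).
  { assert (e / (K + 1) * (K + 1) = e) by (field; lra). nra. }
  pose proof (Rabs_pos h). nra.
Qed.

Lemma deriv_scal D f t v a :
  has_deriv_within D f t v -> has_deriv_within D (fun s => ns_scal a (f s)) t (ns_scal a v).
Proof.
  apply (deriv_lipschitz D (ns_scal a) (Rabs a)). apply Rabs_pos.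
  - intros. now rewrite vscal_sub.
  - intros. now rewrite !ns_scal_assoc, Rmult_comm.
  - intros. rewrite ns_norm_scal. lra.
Qed.

Lemma deriv_lin D (A : X -> X) f t v :
  in_LX A -> has_deriv_within D f t v -> has_deriv_within D (fun s => A (f s)) t (A v).
Proof.
  intros [HL HB]. destruct (bounded_op_nonneg A HB) as [M [HM0 HM]].
  apply (deriv_lipschitz D A M); auto.
  - intros. now rewrite lin_sub.
  - intros. now apply lin_scal.
Qed.

Lemma deriv_opp D f t v :
  has_deriv_within D f t v -> has_deriv_within D (fun s => ns_opp (f s)) t (ns_opp v).
Proof.
  apply (deriv_lipschitz D ns_opp 1). lra.
  - intros. unfold ns_sub. now rewrite vopp_add.
  - intros. now rewrite !vopp_scal, !ns_scal_assoc, Rmult_comm.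
  - intros. rewrite vnorm_opp. lra.
Qed.

Lemma deriv_sub D f g t u v :
  has_deriv_within D f t u -> has_deriv_within D g t v ->
  has_deriv_within D (fun s => ns_sub (f s) (g s)) t (ns_sub u v).
Proof. intros Hf Hg. apply deriv_add; auto. now apply deriv_opp. Qed.

Lemma deriv_vsum D (f f' : nat -> R -> X) t k :
  (forall i, (i <= k)%nat -> has_deriv_within D (f i) t (f' i t)) ->
  has_deriv_within D (fun s => vsum (fun i => f i s) k) t (vsum (fun i => f' i t) k).
Proof.
  induction k; intros H; simpl. apply H; lia.
  apply deriv_add. apply IHk. intros; apply H; lia. apply H; lia.
Qed.

Lemma deriv_cscal D (c : R -> R) (w : X) t l :
  derivable_pt_lim c t l -> has_deriv_within D (fun s => ns_scal (c s) w) t (ns_scal l w).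
Proof.
  intros Hc e He. pose proof (vnorm_nonneg w) as Hw.
  destruct (Hc (e / (ns_norm w + 1)) ltac:(apply Rdiv_lt_0_compat; lra)) as [[d Hd] H]; simpl in *.
  exists d. split; auto. intros h Hh Hhd Dh.
  rewrite ns_scal_assoc, <- !vscal_subr, ns_norm_scal.
  specialize (H h Hh Hhd).
  assert (Habs : Rabs (c (t + h) - c t - h * l) <= e / (ns_norm w + 1) * Rabs h).
  { replace (c (t + h) - c t - h * l) with (((c (t + h) - c t) / h - l) * h) by (field; auto).
    rewrite Rabs_mult. apply Rmult_le_compat_r. apply Rabs_pos. lra. }
  assert (e / (ns_norm w + 1) * (ns_norm w + 1) = e) by (field; lra).
  pose proof (Rabs_pos h). pose proof (Rabs_pos (c (t + h) - c t - h * l)).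
  eapply Rle_trans. apply Rmult_le_compat_r. auto. apply Habs. nra.
Qed.

Lemma deriv_continuity D f t v :
  has_deriv_within D f t v -> forall e, e > 0 -> exists d, d > 0 /\
    forall s, D s -> Rabs (s - t) < d -> ns_norm (ns_sub (f s) (f t)) <= e.
Proof.
  intros H e He. pose proof (vnorm_nonneg v).
  destruct (H 1 ltac:(lra)) as [d [Hd Hd']].
  set (d' := e / (ns_norm v + 2)).
  assert (Hd'e : d' * (ns_norm v + 2) = e) by (unfold d'; field; lra).
  exists (Rmin d d'). split. apply Rmin_glb_lt; auto. unfold d'; apply Rdiv_lt_0_compat; lra.
  intros s Ds Hs. pose proof (Rmin_l d d'). pose proof (Rmin_r d d').
  destruct (Req_dec s t) as [->|Hst]. rewrite vsub_self, vnorm0. lra.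
  specialize (Hd' (s - t) ltac:(lra) ltac:(lra)). replace (t + (s - t)) with s in Hd' by ring.
  specialize (Hd' Ds).
  rewrite <- (vsub_add_r (ns_sub (f s) (f t)) (ns_scal (s - t) v)).
  eapply Rle_trans. apply ns_norm_triangle. rewrite ns_norm_scal.
  pose proof (Rabs_pos (s - t)). nra.
Qed.

Lemma deriv_perturb D f g t v :
  has_deriv_within D f t v ->
  (forall e, e > 0 -> exists d, d > 0 /\ forall h, h <> 0 -> Rabs h < d -> D (t + h) ->
     ns_norm (ns_sub (ns_sub (g (t + h)) (g t)) (ns_sub (f (t + h)) (f t))) <= e * Rabs h) ->
  has_deriv_within D g t v.
Proof.
  intros Hf Hr e He.
  destruct (Hf (e/2) ltac:(lra)) as [d1 [Hd1 H1]], (Hr (e/2) ltac:(lra)) as [d2 [Hd2 H2]].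
  exists (Rmin d1 d2). split. now apply Rmin_glb_lt.
  intros h Hh Hhd Dh. pose proof (Rmin_l d1 d2). pose proof (Rmin_r d1 d2).
  assert (Hdec : ns_sub (ns_sub (g (t + h)) (g t)) (ns_scal h v) =
    ns_add (ns_sub (ns_sub (g (t + h)) (g t)) (ns_sub (f (t + h)) (f t)))
           (ns_sub (ns_sub (f (t + h)) (f t)) (ns_scal h v))) by vring.
  rewrite Hdec. eapply Rle_trans. apply ns_norm_triangle.
  replace (e * Rabs h) with (e/2 * Rabs h + e/2 * Rabs h) by field.
  apply Rplus_le_compat; [apply H2 | apply H1]; auto; lra.
Qed.

Lemma derivable_pt_lim_increment (c : R -> R) t l : derivable_pt_lim c t l ->
  exists d, d > 0 /\ forall h, Rabs h < d -> Rabs (c (t + h) - c t) <= (Rabs l + 1) * Rabs h.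
Proof.
  intros Hc. destruct (Hc 1 ltac:(lra)) as [[d Hd] H]; simpl in H.
  exists d. split; auto. intros h Hh. destruct (Req_dec h 0) as [->|Hh0].
  - rewrite Rplus_0_r, Rminus_diag_eq, Rabs_R0; auto. lra.
  - specialize (H h Hh0 Hh).
    replace (c (t + h) - c t) with (((c (t + h) - c t) / h - l) * h + l * h) by (field; auto).
    eapply Rle_trans. apply Rabs_triang. rewrite !Rabs_mult.
    pose proof (Rabs_pos h). nra.
Qed.

Lemma deriv_prod D (c : R -> R) F t l (F' : X) :
  derivable_pt_lim c t l -> has_deriv_within D F t F' ->
  has_deriv_within D (fun s => ns_scal (c s) (F s)) t (ns_add (ns_scal l (F t)) (ns_scal (c t) F')).
Proof.
  intros Hc HF.
  apply (deriv_perturb D (fun s => ns_add (ns_scal (c s) (F t)) (ns_scal (c t) (F s)))).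
  { apply deriv_add. now apply deriv_cscal. now apply deriv_scal. }
  intros e He. set (L := Rabs l + 1). assert (HL : L > 0) by (unfold L; pose proof (Rabs_pos l); lra).
  destruct (derivable_pt_lim_increment c t l Hc) as [d1 [Hd1 H1]].
  destruct (deriv_continuity D F t F' HF (e / L) ltac:(apply Rdiv_lt_0_compat; lra)) as [d2 [Hd2 H2]].
  exists (Rmin d1 d2). split. now apply Rmin_glb_lt.
  intros h Hh Hhd Dh. pose proof (Rmin_l d1 d2). pose proof (Rmin_r d1 d2).
  (* the remainder is the product of the two increments *)
  assert (Hdec : ns_sub (ns_sub (ns_scal (c (t + h)) (F (t + h))) (ns_scal (c t) (F t)))
     (ns_sub (ns_add (ns_scal (c (t + h)) (F t)) (ns_scal (c t) (F (t + h))))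
             (ns_add (ns_scal (c t) (F t)) (ns_scal (c t) (F t)))) =
     ns_scal (c (t + h) - c t) (ns_sub (F (t + h)) (F t))) by vring.
  rewrite Hdec, ns_norm_scal.
  specialize (H1 h ltac:(lra)).
  specialize (H2 (t + h) Dh ltac:(replace (t + h - t) with h by ring; lra)).
  replace (e * Rabs h) with ((L * Rabs h) * (e / L)) by (field; lra).
  apply Rmult_le_compat; auto using Rabs_pos, vnorm_nonneg.
Qed.

End Calculus.

Section Continuity.
Context {X : NormedSpace}.
Implicit Types (D : R -> Prop) (f g : R -> X).

Lemma cont_restrict D D' f : (forall s, D' s -> D s) -> continuous_on D f -> continuous_on D' f.
Proof.
  intros HD H t Dt e He. destruct (H t (HD t Dt) e He) as [d [Hd H']]. exists d. split; auto.
Qed.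

Lemma cont_ext D f g : (forall s, D s -> f s = g s) -> continuous_on D f -> continuous_on D g.
Proof.
  intros Heq H t Dt e He. destruct (H t Dt e He) as [d [Hd H']]. exists d. split; auto.
  intros s Ds Hs. rewrite <- !Heq; auto.
Qed.

Lemma cont_near D f :
  (forall t, D t -> exists g eta, eta > 0 /\
     (forall s, D s -> Rabs (s - t) < eta -> f s = g s) /\ continuous_on D g) ->
  continuous_on D f.
Proof.
  intros H t Dt e He. destruct (H t Dt) as [g [eta [Heta [Heq Hg]]]].
  destruct (Hg t Dt e He) as [d [Hd Hd']]. exists (Rmin d eta). split. now apply Rmin_glb_lt.
  intros s Ds Hs. pose proof (Rmin_l d eta). pose proof (Rmin_r d eta).
  rewrite (Heq s Ds ltac:(lra)), (Heq t Dt ltac:(rewrite Rminus_diag_eq, Rabs_R0; lra)).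
  apply Hd'; auto; lra.
Qed.

Lemma cont_of_deriv D f f' : (forall t, D t -> has_deriv_within D f t (f' t)) -> continuous_on D f.
Proof.
  intros H t Dt e He. destruct (deriv_continuity D f t (f' t) (H t Dt) (e/2) ltac:(lra)) as [d [Hd H']].
  exists d. split; auto. intros s Ds Hs. specialize (H' s Ds Hs). lra.
Qed.

Lemma cont_const D (c : X) : continuous_on D (fun _ => c).
Proof. intros t Dt e He. exists 1. split. lra. intros. rewrite vsub_self, vnorm0. lra. Qed.

Lemma cont_add D f g : continuous_on D f -> continuous_on D g -> continuous_on D (fun s => ns_add (f s) (g s)).
Proof.
  intros Hf Hg t Dt e He.
  destruct (Hf t Dt (e/2) ltac:(lra)) as [d1 [Hd1 H1]], (Hg t Dt (e/2) ltac:(lra)) as [d2 [Hd2 H2]].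
  exists (Rmin d1 d2). split. now apply Rmin_glb_lt.
  intros s Ds Hs. pose proof (Rmin_l d1 d2). pose proof (Rmin_r d1 d2).
  rewrite vsub_add_distr. eapply Rle_lt_trans. apply ns_norm_triangle.
  replace e with (e/2 + e/2) by field. apply Rplus_lt_compat; [apply H1 | apply H2]; auto; lra.
Qed.

Lemma cont_vsum D (f : nat -> R -> X) k :
  (forall i, (i <= k)%nat -> continuous_on D (f i)) -> continuous_on D (fun s => vsum (fun i => f i s) k).
Proof.
  induction k; intros H; simpl. apply H; lia.
  apply cont_add. apply IHk. intros; apply H; lia. apply H; lia.
Qed.

Lemma cont_lin D (A : X -> X) f : in_LX A -> continuous_on D f -> continuous_on D (fun s => A (f s)).
Proof.
  intros [HL HB] Hf t Dt e He. destruct (bounded_op_nonneg A HB) as [M [HM0 HM]].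
  destruct (Hf t Dt (e/(M + 1)) ltac:(apply Rdiv_lt_0_compat; lra)) as [d [Hd H]].
  exists d. split; auto. intros s Ds Hs. rewrite <- lin_sub by auto. eapply Rle_lt_trans. apply HM.
  specialize (H s Ds Hs). assert (e / (M + 1) * (M + 1) = e) by (field; lra).
  pose proof (vnorm_nonneg (ns_sub (f s) (f t))). nra.
Qed.

Lemma cont_prod D (c : R -> R) f :
  (forall t, D t -> continuity_pt c t) -> continuous_on D f ->
  continuous_on D (fun s => ns_scal (c s) (f s)).
Proof.
  intros Hc Hf t Dt e He.
  pose proof (vnorm_nonneg (f t)). pose proof (Rabs_pos (c t)).
  set (ef := e / 2 / (Rabs (c t) + 1)). set (ec := e / 2 / (ns_norm (f t) + 1)).
  assert (Hef : ef * (Rabs (c t) + 1) = e / 2) by (unfold ef; field; lra).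
  assert (Hec : ec * (ns_norm (f t) + 1) = e / 2) by (unfold ec; field; lra).
  destruct (Hf t Dt (Rmin ef 1) ltac:(apply Rmin_glb_lt; unfold ef; [apply Rdiv_lt_0_compat|]; lra))
    as [d1 [Hd1 H1]].
  destruct (Hc t Dt ec ltac:(unfold ec; apply Rdiv_lt_0_compat; lra)) as [d2 [Hd2 H2]].
  exists (Rmin d1 d2). split. now apply Rmin_glb_lt.
  intros s Ds Hs. pose proof (Rmin_l d1 d2). pose proof (Rmin_r d1 d2).
  specialize (H1 s Ds ltac:(lra)). pose proof (Rmin_l ef 1). pose proof (Rmin_r ef 1).
  assert (Hdec : ns_sub (ns_scal (c s) (f s)) (ns_scal (c t) (f t)) =
    ns_add (ns_scal (c s - c t) (f s)) (ns_scal (c t) (ns_sub (f s) (f t)))) by vring.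
  rewrite Hdec. eapply Rle_lt_trans. apply ns_norm_triangle. rewrite !ns_norm_scal.
  assert (Hfs : ns_norm (f s) <= ns_norm (f t) + 1).
  { rewrite <- (vsub_add_r (f s) (f t)). eapply Rle_trans. apply ns_norm_triangle. lra. }
  assert (Hcs : Rabs (c s - c t) < ec).
  { destruct (Req_dec s t) as [->|]. rewrite Rminus_diag_eq, Rabs_R0 by auto. unfold ec.
    apply Rdiv_lt_0_compat; lra. apply (H2 s). repeat split; auto. simpl. unfold R_dist. lra. }
  pose proof (Rabs_pos (c s - c t)). pose proof (vnorm_nonneg (f s)).
  pose proof (vnorm_nonneg (ns_sub (f s) (f t))).
  assert (Rabs (c s - c t) * ns_norm (f s) < e / 2).
  { rewrite <- Hec. apply Rle_lt_trans with (Rabs (c s - c t) * (ns_norm (f t) + 1)).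
    now apply Rmult_le_compat_l. apply Rmult_lt_compat_r; lra. }
  assert (Rabs (c t) * ns_norm (ns_sub (f s) (f t)) < e / 2).
  { rewrite <- Hef. apply Rle_lt_trans with ((Rabs (c t) + 1) * ns_norm (ns_sub (f s) (f t))).
    apply Rmult_le_compat_r; lra. rewrite Rmult_comm. apply Rmult_lt_compat_r; lra. }
  lra.
Qed.

Lemma cont_glue D f a :
  continuous_on (fun s => D s /\ s <= a) f -> continuous_on (fun s => D s /\ a <= s) f ->
  continuous_on D f.
Proof.
  intros H1 H2 t Dt e He.
  destruct (Rlt_or_le t a) as [Hlt|Hge]; [|destruct (Rle_lt_or_eq_dec _ _ Hge) as [Hgt| ->]].
  - destruct (H1 t (conj Dt (Rlt_le _ _ Hlt)) e He) as [d [Hd H]].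
    exists (Rmin d (a - t)). split. apply Rmin_glb_lt; lra.
    intros s Ds Hs. pose proof (Rmin_l d (a - t)). pose proof (Rmin_r d (a - t)).
    apply H. split; auto. apply Rabs_def2 in Hs; lra. lra.
  - destruct (H2 t (conj Dt Hge) e He) as [d [Hd H]].
    exists (Rmin d (t - a)). split. apply Rmin_glb_lt; lra.
    intros s Ds Hs. pose proof (Rmin_l d (t - a)). pose proof (Rmin_r d (t - a)).
    apply H. split; auto. apply Rabs_def2 in Hs; lra. lra.
  - destruct (H1 t (conj Dt (Rle_refl _)) e He) as [d1 [Hd1 H1']].
    destruct (H2 t (conj Dt (Rle_refl _)) e He) as [d2 [Hd2 H2']].
    exists (Rmin d1 d2). split. now apply Rmin_glb_lt.
    intros s Ds Hs. pose proof (Rmin_l d1 d2). pose proof (Rmin_r d1 d2).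
    destruct (Rle_or_lt s t); [apply H1' | apply H2']; auto; try split; auto; lra.
Qed.

Lemma cont_shift D D' f a :
  (forall s, D' s -> D (s - a)) -> continuous_on D f -> continuous_on D' (fun s => f (s - a)).
Proof.
  intros HD H t Dt e He. destruct (H (t - a) (HD t Dt) e He) as [d [Hd H']]. exists d. split; auto.
  intros s Ds Hs. apply H'; auto. now replace (s - a - (t - a)) with (s - t) by ring.
Qed.

End Continuity.

(** * Mean value inequality and uniform continuity *)

Section MeanValue.
Context {X : NormedSpace}.
Implicit Types (D : R -> Prop) (f G : R -> X).

Lemma increment_triangle G (c : X) p q r :
  ns_norm (ns_sub (ns_sub (G r) (G p)) (ns_scal (r - p) c)) <=
  ns_norm (ns_sub (ns_sub (G r) (G q)) (ns_scal (r - q) c)) +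
  ns_norm (ns_sub (ns_sub (G q) (G p)) (ns_scal (q - p) c)).
Proof.
  replace (ns_sub (ns_sub (G r) (G p)) (ns_scal (r - p) c)) with
    (ns_add (ns_sub (ns_sub (G r) (G q)) (ns_scal (r - q) c))
            (ns_sub (ns_sub (G q) (G p)) (ns_scal (q - p) c))) by vring.
  apply ns_norm_triangle.
Qed.

Lemma deriv_increment_bound D G r (g c : X) M :
  has_deriv_within D G r g -> ns_norm (ns_sub g c) <= M ->
  forall e, e > 0 -> exists d, d > 0 /\ forall r', D r' -> Rabs (r' - r) < d ->
    ns_norm (ns_sub (ns_sub (G r') (G r)) (ns_scal (r' - r) c)) <= (M + e) * Rabs (r' - r).
Proof.
  intros Hd HM e He. destruct (Hd e He) as [d [Hd0 H]]. exists d. split; auto.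
  intros r' Dr' Hr'. destruct (Req_dec r' r) as [->|Hne].
  - rewrite vsub_self, Rminus_diag_eq, vscal0, vsub0, vnorm0, Rabs_R0 by auto. lra.
  - specialize (H (r' - r) ltac:(lra) Hr'). replace (r + (r' - r)) with r' in H by ring.
    specialize (H Dr').
    replace (ns_sub (ns_sub (G r') (G r)) (ns_scal (r' - r) c)) with
      (ns_add (ns_sub (ns_sub (G r') (G r)) (ns_scal (r' - r) g)) (ns_scal (r' - r) (ns_sub g c))) by vring.
    eapply Rle_trans. apply ns_norm_triangle. rewrite ns_norm_scal.
    pose proof (Rabs_pos (r' - r)). nra.
Qed.

Lemma le_of_le_plus_eps (x y : R) : (forall e, e > 0 -> x <= y + e) -> x <= y.
Proof.
  intros H. destruct (Rle_or_lt x y); auto. specialize (H ((x - y) / 2)). lra.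
Qed.

Lemma mean_value_ineq D G G' (c : X) (M s t : R) :
  s <= t -> (forall r, s <= r <= t -> D r) ->
  (forall r, s <= r <= t -> has_deriv_within D G r (G' r)) ->
  (forall r, s <= r <= t -> ns_norm (ns_sub (G' r) c) <= M) ->
  ns_norm (ns_sub (ns_sub (G t) (G s)) (ns_scal (t - s) c)) <= M * (t - s).
Proof.
  intros Hst HD Hder HM. apply le_of_le_plus_eps. intros e0 He0.
  set (e := e0 / (t - s + 1)).
  assert (He : e > 0) by (unfold e; apply Rdiv_lt_0_compat; lra).
  assert (Hee : e * (t - s) <= e0) by (assert (e * (t - s + 1) = e0) by (unfold e; field; lra); nra).
  set (Q := fun r => forall r', s <= r' <= r -> r' <= t ->
     ns_norm (ns_sub (ns_sub (G r') (G s)) (ns_scal (r' - s) c)) <= (M + e) * (r' - s)).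
  enough (HQ : Q t) by (specialize (HQ t ltac:(lra) ltac:(lra)); nra).
  apply (real_ind s t Q Hst).
  - intros r' Hr' _. replace r' with s by lra.
    rewrite vsub_self, Rminus_diag_eq, vscal0, vsub0, vnorm0 by auto. lra.
  - intros r r' Hr Qr r'' H1 H2. apply Qr; lra.
  - intros r Hr Qr.
    destruct (deriv_increment_bound D G r (G' r) c M (Hder r ltac:(lra)) (HM r ltac:(lra)) e He)
      as [d [Hd Hinc]].
    exists (d / 2). split. lra. intros r' Hr' Hr't.
    destruct (Rle_or_lt r' r). apply Qr; lra.
    eapply Rle_trans. apply (increment_triangle G c s r r').
    specialize (Hinc r' (HD r' ltac:(lra)) ltac:(rewrite Rabs_right; lra)).
    rewrite Rabs_right in Hinc by lra. specialize (Qr r ltac:(lra) ltac:(lra)). lra.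
  - intros r Hr Hbel r' Hr' Hr't. destruct (Rlt_or_le r' r). apply (Hbel r'); lra.
    replace r' with r by lra.
    destruct (deriv_increment_bound D G r (G' r) c M (Hder r ltac:(lra)) (HM r ltac:(lra)) e He)
      as [d [Hd Hinc]].
    set (q := r - Rmin (d / 2) ((r - s) / 2)).
    pose proof (Rmin_l (d / 2) ((r - s) / 2)). pose proof (Rmin_r (d / 2) ((r - s) / 2)).
    assert (0 < Rmin (d / 2) ((r - s) / 2)) by (apply Rmin_glb_lt; lra).
    assert (Hq : s < q < r) by (unfold q; lra).
    eapply Rle_trans. apply (increment_triangle G c s q r).
    specialize (Hinc q (HD q ltac:(lra)) ltac:(rewrite Rabs_left; unfold q; lra)).
    rewrite Rabs_left in Hinc by lra.
    replace (ns_sub (ns_sub (G r) (G q)) (ns_scal (r - q) c))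
      with (ns_opp (ns_sub (ns_sub (G q) (G r)) (ns_scal (q - r) c))) by vring.
    rewrite vnorm_opp. specialize (Hbel q ltac:(lra) q ltac:(lra) ltac:(lra)). lra.
Qed.

Lemma const_of_deriv0 D G G' s t :
  s <= t -> (forall r, s <= r <= t -> D r) ->
  (forall r, s <= r <= t -> has_deriv_within D G r (G' r)) ->
  (forall r, s <= r <= t -> G' r = ns_zero) -> G t = G s.
Proof.
  intros Hst HD Hd H0. apply vsub_eq, vnorm_eq0.
  assert (H := mean_value_ineq D G G' ns_zero 0 s t Hst HD Hd).
  rewrite vscal0r, vsub0, Rmult_0_l in H.
  assert (H' : forall r, s <= r <= t -> ns_norm (ns_sub (G' r) ns_zero) <= 0).
  { intros r Hr. rewrite H0, vsub_self, vnorm0 by auto. lra. }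
  specialize (H H'). pose proof (vnorm_nonneg (ns_sub (G t) (G s))). lra.
Qed.

(* Pairs not both in [a, r0] lie within eta of r. *)
Lemma unif_cont_extend f (a b r r0 r1 e eta d : R) :
  r - eta / 2 <= r0 <= r -> r1 <= r + eta / 2 ->
  (forall s, a <= s <= b -> Rabs (s - r) < eta -> ns_norm (ns_sub (f s) (f r)) < e / 2) ->
  (forall u v, a <= u <= r0 -> a <= v <= r0 -> u <= b -> v <= b -> Rabs (u - v) < d ->
     ns_norm (ns_sub (f u) (f v)) <= e) ->
  forall u v, a <= u <= r1 -> a <= v <= r1 -> u <= b -> v <= b -> Rabs (u - v) < Rmin d (eta / 2) ->
    ns_norm (ns_sub (f u) (f v)) <= e.
Proof.
  intros Hr0 Hr1 Hcr H u v Hu Hv Hub Hvb Huv.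
  pose proof (Rmin_l d (eta / 2)). pose proof (Rmin_r d (eta / 2)).
  destruct (Rle_or_lt u r0), (Rle_or_lt v r0); try (apply H; auto; lra).
  all: apply Rabs_def2 in Huv; eapply Rle_trans; [apply (vnorm_sub_triangle _ (f r))|];
    rewrite (vnorm_sub_sym (f r)); apply Rlt_le;
    replace e with (e / 2 + e / 2) by field; apply Rplus_lt_compat; apply Hcr;
    (lra || apply Rabs_def1; lra).
Qed.

Lemma unif_cont_interval f (a b : R) :
  a <= b -> continuous_on (fun t => a <= t <= b) f ->
  forall e, e > 0 -> exists d, d > 0 /\ forall u v, a <= u <= b -> a <= v <= b -> Rabs (u - v) < d ->
    ns_norm (ns_sub (f u) (f v)) <= e.
Proof.
  intros Hab Hc e He.
  set (Q := fun r => exists d, d > 0 /\ forall u v, a <= u <= r -> a <= v <= r -> u <= b -> v <= b ->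
           Rabs (u - v) < d -> ns_norm (ns_sub (f u) (f v)) <= e).
  enough (HQ : Q b) by (destruct HQ as [d [Hd H]]; exists d; split; auto; intros; apply H; auto; lra).
  apply (real_ind a b Q Hab).
  - exists 1. split. lra. intros u v Hu Hv _ _ _. replace u with a by lra. replace v with a by lra.
    rewrite vsub_self, vnorm0. lra.
  - intros r r' Hr [d [Hd H]]. exists d. split; auto. intros u v Hu Hv Hub Hvb Huv. apply H; auto; lra.
  - intros r Hr [d [Hd H]]. destruct (Hc r ltac:(lra) (e / 2) ltac:(lra)) as [eta [Heta Hcr]].
    exists (eta / 2). split. lra. exists (Rmin d (eta / 2)). split. apply Rmin_glb_lt; lra.
    apply (unif_cont_extend f a b r r); auto; lra.
  - intros r Hr Hbel. destruct (Hc r ltac:(lra) (e / 2) ltac:(lra)) as [eta [Heta Hcr]].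
    set (r' := Rmax a (r - eta / 2)).
    assert (Hr' : a <= r' < r /\ r - eta / 2 <= r').
    { unfold r'. split. split. apply Rmax_l. apply Rmax_lub_lt; lra. apply Rmax_r. }
    destruct (Hbel r' ltac:(lra)) as [d [Hd H]].
    exists (Rmin d (eta / 2)). split. apply Rmin_glb_lt; lra.
    apply (unif_cont_extend f a b r r'); auto; lra.
Qed.

End MeanValue.

(** * Riemann integrals and primitives *)

Definition eps_prim {X : NormedSpace} (f G : R -> X) (a b e d : R) : Prop :=
  forall s u t, a <= s -> s <= u -> u <= t -> t <= b -> t - s < d ->
    ns_norm (ns_sub (ns_sub (G t) (G s)) (ns_scal (t - s) (f u))) <= e * (t - s).

Section Integral.
Context {X : NormedSpace}.
Implicit Types (f G : R -> X).

Lemma riemann_sum_near_increment f G (a b e d : R) n (p xi : nat -> R) :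
  eps_prim f G a b e d -> (0 < n)%nat -> a <= p O -> p n <= b ->
  (forall i, (i < n)%nat -> p i <= xi i <= p (S i) /\ p (S i) - p i < d) ->
  ns_norm (ns_sub (vsum (fun i => ns_scal (p (S i) - p i) (f (xi i))) (pred n))
                  (ns_sub (G (p n)) (G (p O)))) <= e * (p n - p O).
Proof.
  intros HG Hn Ha Hb Hp.
  assert (Hmono : forall i j, (i <= j <= n)%nat -> p i <= p j).
  { intros i j Hij. induction j. replace i with 0%nat by lia. lra.
    destruct (Nat.eq_dec i (S j)) as [->|]. lra.
    apply Rle_trans with (p j). apply IHj; lia. destruct (Hp j ltac:(lia)); lra. }
  destruct n as [|n]. lia. simpl pred.
  induction n as [|m IHm].
  - simpl. destruct (Hp O ltac:(lia)) as [Hx Hd]. rewrite vnorm_sub_sym. apply HG; lra.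
  - specialize (IHm ltac:(lia) ltac:(pose proof (Hmono (S m) (S (S m)) ltac:(lia)); lra)
      ltac:(intros i Hi; apply Hp; lia) ltac:(intros i j Hij; apply Hmono; lia)).
    destruct (Hp (S m) ltac:(lia)) as [Hx Hd].
    pose proof (Hmono O (S m) ltac:(lia)).
    simpl vsum.
    replace (ns_sub (ns_add (vsum (fun i => ns_scal (p (S i) - p i) (f (xi i))) m)
                            (ns_scal (p (S (S m)) - p (S m)) (f (xi (S m)))))
                    (ns_sub (G (p (S (S m)))) (G (p O)))) with
      (ns_sub (ns_sub (vsum (fun i => ns_scal (p (S i) - p i) (f (xi i))) m) (ns_sub (G (p (S m))) (G (p O))))
              (ns_sub (ns_sub (G (p (S (S m)))) (G (p (S m)))) (ns_scal (p (S (S m)) - p (S m)) (f (xi (S m))))))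
      by vring.
    eapply Rle_trans. apply vnorm_sub_le.
    replace (e * (p (S (S m)) - p O)) with (e * (p (S m) - p O) + e * (p (S (S m)) - p (S m))) by ring.
    apply Rplus_le_compat; auto. apply HG; lra.
Qed.

Lemma is_RInt_of_eps_prim f G (a b : R) :
  a < b -> (forall e, e > 0 -> exists d, d > 0 /\ eps_prim f G a b e d) ->
  is_RInt f a b (ns_sub (G b) (G a)).
Proof.
  intros Hab H eps Heps.
  destruct (H (eps / (2 * (b - a))) ltac:(apply Rdiv_lt_0_compat; lra)) as [d [Hd HG]].
  exists d. split; auto. intros n p xi Hp0 Hpn Hp.
  destruct n. rewrite Hp0 in Hpn. lra.
  rewrite <- Hpn, <- Hp0 at 1.
  eapply Rle_lt_trans. apply (riemann_sum_near_increment f G a b _ d (S n) p xi HG); auto; lia || lra.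
  rewrite Hpn, Hp0. replace (eps / (2 * (b - a)) * (b - a)) with (eps / 2) by (field; lra). lra.
Qed.

Lemma eps_prim_of_deriv f G (a b : R) :
  a <= b -> (forall t, a <= t <= b -> has_deriv_within (fun s => a <= s <= b) G t (f t)) ->
  continuous_on (fun s => a <= s <= b) f ->
  forall e, e > 0 -> exists d, d > 0 /\ eps_prim f G a b e d.
Proof.
  intros Hab Hd Hc e He. destruct (unif_cont_interval f a b Hab Hc e He) as [d [Hd0 Hu]].
  exists d. split; auto. intros s u t Hs Hsu Hut Htb Hts.
  apply (mean_value_ineq (fun s => a <= s <= b) G f (f u) e s t); try lra.
  - intros r Hr. lra.
  - intros r Hr. apply Hd; lra.
  - intros r Hr. apply Hu; try lra. apply Rabs_def1; lra.
Qed.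

Lemma is_RInt_deriv f G (a b : R) :
  a < b -> (forall t, a <= t <= b -> has_deriv_within (fun s => a <= s <= b) G t (f t)) ->
  continuous_on (fun s => a <= s <= b) f ->
  is_RInt f a b (ns_sub (G b) (G a)).
Proof. intros Hab Hd Hc. apply is_RInt_of_eps_prim; auto. apply eps_prim_of_deriv; auto; lra. Qed.

Lemma deriv_of_eps_prim f G (a b t : R) :
  (forall e, e > 0 -> exists d, d > 0 /\ eps_prim f G a b e d) -> a <= t <= b ->
  has_deriv_within (fun s => a <= s <= b) G t (f t).
Proof.
  intros HG Ht e He. destruct (HG e He) as [d [Hd HL]]. exists d. split; auto.
  intros h Hh Hhd Dh. destruct (Rlt_or_le 0 h) as [Hpos|Hneg].
  - rewrite Rabs_right in * by lra. replace h with (t + h - t) at 2 3 by ring.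
    apply HL; lra.
  - rewrite Rabs_left in * by lra.
    replace (ns_sub (ns_sub (G (t + h)) (G t)) (ns_scal h (f t)))
      with (ns_opp (ns_sub (ns_sub (G t) (G (t + h))) (ns_scal (t - (t + h)) (f t)))) by vring.
    rewrite vnorm_opp. replace (- h) with (t - (t + h)) by ring. apply HL; lra.
Qed.

Lemma deriv_of_eps_prim_limit f (G : nat -> R -> X) F (a b : R) :
  (forall t, a <= t <= b -> forall e, e > 0 -> exists N, forall n, (n >= N)%nat ->
     ns_norm (ns_sub (G n t) (F t)) < e) ->
  (forall e, e > 0 -> exists d, d > 0 /\ exists N, forall n, (n >= N)%nat -> eps_prim f (G n) a b e d) ->
  forall t, a <= t <= b -> has_deriv_within (fun s => a <= s <= b) F t (f t).
Proof.
  intros HF HG t0 Ht0. apply deriv_of_eps_prim; auto. intros e He.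
  destruct (HG e He) as [d [Hd [N HN]]]. exists d. split; auto.
  intros s u t Hs Hsu Hut Htb Hts. apply le_of_le_plus_eps. intros eta Heta.
  destruct (HF t ltac:(lra) (eta / 2) ltac:(lra)) as [N1 HN1].
  destruct (HF s ltac:(lra) (eta / 2) ltac:(lra)) as [N2 HN2].
  set (n := (N + N1 + N2)%nat).
  specialize (HN n ltac:(unfold n; lia) s u t Hs Hsu Hut Htb Hts).
  specialize (HN1 n ltac:(unfold n; lia)). specialize (HN2 n ltac:(unfold n; lia)).
  replace (ns_sub (ns_sub (F t) (F s)) (ns_scal (t - s) (f u))) with
    (ns_add (ns_sub (ns_sub (G n t) (G n s)) (ns_scal (t - s) (f u)))
            (ns_sub (ns_sub (G n s) (F s)) (ns_sub (G n t) (F t)))) by vring.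
  eapply Rle_trans. apply ns_norm_triangle.
  eapply Rle_trans. apply Rplus_le_compat_l. apply vnorm_sub_le. lra.
Qed.

End Integral.

Ltac destruct_Rle_dec :=
  repeat match goal with |- context [Rle_dec ?x ?y] =>
    lazymatch x with context [Rle_dec _ _] => fail | _ => idtac end;
    lazymatch y with context [Rle_dec _ _] => fail | _ => idtac end;
    destruct (Rle_dec x y) end;
  repeat match goal with H : ~ (_ <= _) |- _ => apply Rnot_le_lt in H end.

(* [clip a h i t] is the length of [a + i h, a + (i + 1) h] ∩ (-∞, t]. *)
Definition clip (a h : R) (i : nat) (t : R) : R := Rmin (Rmax (t - (a + INR i * h)) 0) h.

Lemma clip_sum (a h t : R) N : h > 0 ->
  sum_f_R0 (fun i => clip a h i t) N = Rmin (Rmax (t - a) 0) (INR (S N) * h).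
Proof.
  intros Hh. induction N.
  - simpl. unfold clip. simpl. f_equal. f_equal. ring. ring.
  - simpl sum_f_R0. rewrite IHN. unfold clip.
    replace (t - (a + INR (S N) * h)) with ((t - a) - INR (S N) * h) by ring.
    replace (INR (S (S N)) * h) with (INR (S N) * h + h) by (rewrite (S_INR (S N)); ring).
    assert (HH : INR (S N) * h > 0) by (apply Rmult_lt_0_compat; auto; apply lt_0_INR; lia).
    generalize (INR (S N) * h) HH. generalize (t - a). intros x y Hy.
    unfold Rmin, Rmax. destruct_Rle_dec; lra.
Qed.

Lemma clip_mono a h i s t : h > 0 -> s <= t -> clip a h i s <= clip a h i t.
Proof. intros. unfold clip, Rmin, Rmax. destruct_Rle_dec; lra. Qed.

Lemma clip_support a h i s t : h > 0 -> s <= t -> clip a h i s < clip a h i t ->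
  a + INR i * h < t /\ s < a + INR i * h + h.
Proof. intros Hh Hst. unfold clip, Rmin, Rmax. destruct_Rle_dec; lra. Qed.

Lemma clip_start a h i : h > 0 -> clip a h i a = 0.
Proof.
  intros Hh. pose proof (pos_INR i). unfold clip, Rmin, Rmax. destruct_Rle_dec; nra.
Qed.

Section StepPrimitive.
Context {X : NormedSpace}.
Implicit Types (f : R -> X).

(* Piecewise linear primitive of the step function taking the value
   [f (a + i h)] on [a + i h, a + (i + 1) h]. *)
Definition step_prim f (a h : R) (N : nat) (t : R) : X :=
  vsum (fun i => ns_scal (clip a h i t) (f (a + INR i * h))) N.

Definition uniform_step_prim f (a b t : R) (n : nat) : X :=
  step_prim f a ((b - a) / INR (S n)) n t.

Lemma uniform_step_prim_start f (a b : R) n : a < b -> uniform_step_prim f a b a n = ns_zero.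
Proof.
  intros Hab. apply vsum_zero. intros i _.
  rewrite clip_start. apply vscal0. apply Rdiv_lt_0_compat. lra. apply lt_0_INR; lia.
Qed.

Lemma step_prim_eps_prim f (a b e du : R) N :
  a < b -> (forall u v, a <= u <= b -> a <= v <= b -> Rabs (u - v) < du -> ns_norm (ns_sub (f u) (f v)) <= e) ->
  (b - a) / INR (S N) < du / 2 -> e >= 0 ->
  eps_prim f (step_prim f a ((b - a) / INR (S N)) N) a b e (du / 2).
Proof.
  intros Hab Hu Hh He s u t Hs Hsu Hut Htb Hts.
  set (h := (b - a) / INR (S N)) in *.
  assert (HSN : INR (S N) > 0) by (apply lt_0_INR; lia).
  assert (Hhp : h > 0) by (unfold h; apply Rdiv_lt_0_compat; lra).
  assert (HNh : INR (S N) * h = b - a) by (unfold h; field; lra).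
  assert (Hsum : sum_f_R0 (fun i => clip a h i t - clip a h i s) N = t - s).
  { rewrite minus_sum, !clip_sum, HNh by auto. unfold Rmin, Rmax. destruct_Rle_dec; lra. }
  replace (ns_sub (ns_sub (step_prim f a h N t) (step_prim f a h N s)) (ns_scal (t - s) (f u))) with
    (vsum (fun i => ns_scal (clip a h i t - clip a h i s) (ns_sub (f (a + INR i * h)) (f u))) N).
  2:{ rewrite <- Hsum, <- vsum_scal_const. unfold step_prim. rewrite <- !vsum_sub.
      apply vsum_ext. intros i _. vring. }
  eapply Rle_trans. apply vsum_norm.
  rewrite <- Hsum, scal_sum. apply sum_Rle. intros i Hi. rewrite ns_norm_scal.
  destruct (Rle_lt_or_eq_dec _ _ (clip_mono a h i s t Hhp ltac:(lra))) as [Hlt|Heq].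
  - rewrite Rabs_right by lra. apply Rmult_le_compat_l. lra.
    destruct (clip_support a h i s t Hhp ltac:(lra) Hlt) as [H1 H2].
    assert (Hi' : INR i <= INR N) by (apply le_INR; lia).
    rewrite S_INR in HNh. pose proof (pos_INR i).
    apply Hu; try split; try nra. apply Rabs_def1; nra.
  - rewrite Heq, Rminus_diag_eq, Rabs_R0 by auto. lra.
Qed.

Lemma uniform_step_prim_eps_prim f (a b : R) :
  a < b -> continuous_on (fun s => a <= s <= b) f ->
  forall e, e > 0 -> exists d, d > 0 /\ exists N, forall n, (n >= N)%nat ->
    eps_prim f (fun t => uniform_step_prim f a b t n) a b e d.
Proof.
  intros Hab Hc e He. destruct (unif_cont_interval f a b ltac:(lra) Hc e He) as [du [Hdu Hu]].
  exists (du / 2). split. lra.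
  destruct (INR_unbounded ((b - a) / (du / 2))) as [N HN].
  exists N. intros n Hn. apply step_prim_eps_prim; auto; try lra.
  assert (HnN : INR N <= INR n) by (apply le_INR; lia).
  assert (Hx : (b - a) / (du / 2) > 0) by (apply Rdiv_lt_0_compat; lra).
  rewrite S_INR. apply (Rmult_lt_reg_r (INR n + 1)). lra.
  replace ((b - a) / (INR n + 1) * (INR n + 1)) with (b - a) by (field; lra).
  replace (b - a) with ((b - a) / (du / 2) * (du / 2)) by (field; lra).
  rewrite (Rmult_comm (du / 2)). apply Rmult_lt_compat_r; lra.
Qed.

Lemma uniform_partition_exists (a t d : R) : a < t -> d > 0 ->
  exists n (p xi : nat -> R), (0 < n)%nat /\ p O = a /\ p n = t /\
    forall i, (i < n)%nat -> p i <= xi i <= p (S i) /\ p (S i) - p i < d.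
Proof.
  intros Hat Hd. destruct (INR_unbounded ((t - a) / d)) as [K HK].
  assert (Hta : (t - a) / d > 0) by (apply Rdiv_lt_0_compat; lra).
  assert (HKn : (0 < K)%nat) by (apply INR_lt; simpl; lra).
  set (h := (t - a) / INR K).
  assert (Hh : 0 < h) by (unfold h; apply Rdiv_lt_0_compat; lra).
  assert (Hhd : h < d).
  { unfold h. apply (Rmult_lt_reg_r (INR K)). lra.
    replace ((t - a) / INR K * INR K) with ((t - a) / d * d) by (field; lra).
    rewrite Rmult_comm. apply Rmult_lt_compat_l; lra. }
  exists K, (fun i => a + INR i * h), (fun i => a + INR i * h).
  split; auto. split. simpl. ring. split. unfold h. field. lra.
  intros i Hi. rewrite S_INR. split. split; nra. nra.
Qed.

Lemma uniform_step_prim_cauchy f (a b t : R) :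
  a < b -> continuous_on (fun s => a <= s <= b) f -> a <= t <= b ->
  forall eps, eps > 0 -> exists N, forall m n, (m >= N)%nat -> (n >= N)%nat ->
    ns_norm (ns_sub (uniform_step_prim f a b t m) (uniform_step_prim f a b t n)) < eps.
Proof.
  intros Hab Hc Ht eps Heps.
  destruct (uniform_step_prim_eps_prim f a b Hab Hc (eps / (4 * (b - a))) ltac:(apply Rdiv_lt_0_compat; lra))
    as [d [Hd [N HN]]].
  exists N. intros m n Hm Hn.
  destruct (Req_dec t a) as [->|Hta].
  { rewrite !uniform_step_prim_start, vsub_self, vnorm0 by auto. lra. }
  destruct (uniform_partition_exists a t d ltac:(lra) Hd) as [k [p [xi [Hk [Hp0 [Hpk Hp]]]]]].
  (* both step primitives are within eps/4 of the same Riemann sum *)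
  pose proof (riemann_sum_near_increment _ _ a b _ d k p xi (HN m Hm) Hk ltac:(lra) ltac:(lra) Hp) as T1.
  pose proof (riemann_sum_near_increment _ _ a b _ d k p xi (HN n Hn) Hk ltac:(lra) ltac:(lra) Hp) as T2.
  simpl in T1, T2. rewrite Hpk, Hp0, uniform_step_prim_start, vsub0 in T1, T2 by auto.
  set (RS := vsum (fun i => ns_scal (p (S i) - p i) (f (xi i))) (pred k)) in *.
  replace (ns_sub (uniform_step_prim f a b t m) (uniform_step_prim f a b t n)) with
    (ns_sub (ns_sub RS (uniform_step_prim f a b t n)) (ns_sub RS (uniform_step_prim f a b t m))) by vring.
  eapply Rle_lt_trans. apply vnorm_sub_le.
  assert (eps / (4 * (b - a)) * (t - a) <= eps / 4).
  { replace (eps / 4) with (eps / (4 * (b - a)) * (b - a)) by (field; lra).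
    apply Rmult_le_compat_l. apply Rlt_le, Rdiv_lt_0_compat; lra. lra. }
  lra.
Qed.

Lemma exists_primitive (HX : complete X) f (a b : R) :
  a < b -> continuous_on (fun s => a <= s <= b) f ->
  exists F : R -> X, F a = ns_zero /\
    forall t, a <= t <= b -> has_deriv_within (fun s => a <= s <= b) F t (f t).
Proof.
  intros Hab Hc.
  set (is_lim := fun t l => forall e, e > 0 -> exists N, forall n, (n >= N)%nat ->
     ns_norm (ns_sub (uniform_step_prim f a b t n) l) < e).
  assert (Hex : forall t, a <= t <= b -> exists l, is_lim t l).
  { intros t Ht. apply HX. intros e He. now apply uniform_step_prim_cauchy. }
  set (F := fun t => epsilon (inhabits ns_zero) (is_lim t)).
  assert (HF : forall t, a <= t <= b -> is_lim t (F t)).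
  { intros t Ht. apply epsilon_spec. auto. }
  exists F. split.
  - apply vnorm_small0. intros e He. destruct (HF a ltac:(lra) e He) as [N HN].
    specialize (HN N (le_n N)). rewrite uniform_step_prim_start, vsub0l, vnorm_opp in HN by auto. lra.
  - apply (deriv_of_eps_prim_limit f (fun n t => uniform_step_prim f a b t n)); auto.
    now apply uniform_step_prim_eps_prim.
Qed.

End StepPrimitive.

(** * Iterated primitives of the initial function and their extensions *)

Definition pow_fact (k : nat) (v : R) : R := v ^ k / INR (fact k).

Lemma pow_fact_0 v : pow_fact 0 v = 1.
Proof. unfold pow_fact. simpl. field. Qed.

Lemma pow_fact_at0 k : pow_fact (S k) 0 = 0.
Proof. unfold pow_fact. simpl. unfold Rdiv. ring. Qed.

Lemma pow_fact_deriv k v : derivable_pt_lim (pow_fact (S k)) v (pow_fact k v).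
Proof.
  pose proof (derivable_pt_lim_scal (fun y => y ^ S k) (/ INR (fact (S k))) v _
    (derivable_pt_lim_pow v (S k))) as H.
  replace (pow_fact k v) with (/ INR (fact (S k)) * (INR (S k) * v ^ pred (S k))).
  - intros e He. destruct (H e He) as [d Hd]. exists d. intros h Hh Hhd.
    specialize (Hd h Hh Hhd). unfold pow_fact, Rdiv, mult_real_fct in *.
    now rewrite (Rmult_comm (v ^ S k)), (Rmult_comm ((v + h) ^ S k)).
  - unfold pow_fact. simpl pred. rewrite fact_simpl, mult_INR.
    pose proof (fact_neq_0 k). field. split; apply not_0_INR; lia.
Qed.

Lemma pow_fact_refl_deriv k (v s : R) :
  derivable_pt_lim (fun s => pow_fact k (v - s)) s
    (match k with O => 0 | S j => - pow_fact j (v - s) end).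
Proof.
  destruct k as [|k]. apply (derivable_pt_lim_const (1 / 1)).
  intros e He. destruct (pow_fact_deriv k (v - s) e He) as [d Hd]. exists d. intros h Hh Hhd.
  specialize (Hd (- h) ltac:(lra) ltac:(now rewrite Rabs_Ropp)).
  replace (v - (s + h)) with (v - s + - h) by ring.
  replace ((pow_fact (S k) (v - s + - h) - pow_fact (S k) (v - s)) / h - - pow_fact k (v - s)) with
    (- ((pow_fact (S k) (v - s + - h) - pow_fact (S k) (v - s)) / - h - pow_fact k (v - s))) by (field; auto).
  now rewrite Rabs_Ropp.
Qed.

Lemma pow_fact_continuity k v : continuity_pt (pow_fact k) v.
Proof. unfold pow_fact. reg. Qed.

Section IteratedPrimitives.
Context {X : NormedSpace}.
Variable a : R.
Variables phi phi' phi'' : R -> X.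

Definition prim_from (f : R -> X) : R -> X :=
  epsilon (inhabits (fun _ : R => @ns_zero X))
    (fun F => F a = ns_zero /\ forall t, a <= t <= 0 -> has_deriv_within (fun s => a <= s <= 0) F t (f t)).

(* [phi_prim (k + 2)] is the k-fold primitive of [phi] vanishing at [a]. *)
Fixpoint phi_prim (n : nat) : R -> X :=
  match n with
  | O => phi''
  | S O => phi'
  | S (S O) => phi
  | S ((S (S _)) as m) => prim_from (phi_prim m)
  end.

Hypothesis HX : complete X.
Hypothesis Ha : a < 0.
Hypothesis Hphi : is_C2_on (fun s => a <= s <= 0) phi phi' phi''.

Lemma phi_prim_spec n :
  continuous_on (fun s => a <= s <= 0) (phi_prim n) /\
  (forall t, a <= t <= 0 -> has_deriv_within (fun s => a <= s <= 0) (phi_prim (S n)) t (phi_prim n t)) /\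
  ((3 <= S n)%nat -> phi_prim (S n) a = ns_zero).
Proof.
  destruct Hphi as [[Hd0 Hc0] [Hd1 Hc1]].
  induction n as [|n [Hc [Hd Hz]]].
  - repeat split; auto. lia.
  - split. now apply (cont_of_deriv _ _ (phi_prim n)).
    destruct n as [|n]. split; auto. lia.
    assert (Hex : exists F : R -> X, F a = ns_zero /\ forall t, a <= t <= 0 ->
        has_deriv_within (fun s => a <= s <= 0) F t (phi_prim (S (S n)) t)).
    { apply exists_primitive; auto. now apply (cont_of_deriv _ _ (phi_prim (S n))). }
    pose proof (epsilon_spec (inhabits (fun _ : R => @ns_zero X)) _ Hex) as Hsp.
    change (phi_prim (S (S (S n)))) with (prim_from (phi_prim (S (S n)))).
    split. apply Hsp. intros _. apply Hsp.
Qed.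

Lemma phi_prim_cont n : continuous_on (fun s => a <= s <= 0) (phi_prim n).
Proof. apply phi_prim_spec. Qed.

Lemma phi_prim_deriv n t : a <= t <= 0 ->
  has_deriv_within (fun s => a <= s <= 0) (phi_prim (S n)) t (phi_prim n t).
Proof. apply phi_prim_spec. Qed.

Lemma phi_prim_start n : (3 <= n)%nat -> phi_prim n a = ns_zero.
Proof. intros Hn. destruct n. lia. now apply phi_prim_spec. Qed.

End IteratedPrimitives.

Section TaylorExtension.
Context {X : NormedSpace}.
Variables (a : R) (phi phi' phi'' : R -> X).
Local Notation Phi := (phi_prim a phi phi' phi'').

Definition phi_taylor (n : nat) (v : R) : X :=
  vsum (fun k => ns_scal (pow_fact k v) (Phi (S n - k) 0)) n.

(* Note the index shift: [phi_ext n] extends [Phi (S n)]. *)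
Definition phi_ext (n : nat) (v : R) : X :=
  if Rlt_dec v a then ns_zero
  else if Rle_dec v 0 then Phi (S n) v
  else phi_taylor n v.

Lemma phi_taylor_deriv D n v : has_deriv_within D (phi_taylor (S n)) v (phi_taylor n v).
Proof.
  replace (phi_taylor n v) with (ns_add (ns_scal 0 (Phi (S (S n)) 0)) (phi_taylor n v))
    by now rewrite vscal0, vadd0l.
  apply (deriv_ext_all D (fun s => ns_add (ns_scal (pow_fact 0 s) (Phi (S (S n)) 0))
    (vsum (fun i => ns_scal (pow_fact (S i) s) (Phi (S n - i) 0)) n))).
  { intros s. unfold phi_taylor. now rewrite vsum_shift. }
  apply deriv_add.
  - apply deriv_cscal. apply (derivable_pt_lim_const (1 / 1)).
  - apply (deriv_vsum D (fun i s => ns_scal (pow_fact (S i) s) (Phi (S n - i) 0))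
      (fun i s => ns_scal (pow_fact i s) (Phi (S n - i) 0))).
    intros i _. apply deriv_cscal, pow_fact_deriv.
Qed.

Lemma phi_taylor_cont D n : continuous_on D (phi_taylor n).
Proof.
  apply (cont_vsum D (fun k v => ns_scal (pow_fact k v) (Phi (S n - k) 0))).
  intros k _. apply cont_prod. intros; apply pow_fact_continuity. apply cont_const.
Qed.

Lemma phi_taylor_at0 n : phi_taylor n 0 = Phi (S n) 0.
Proof.
  unfold phi_taylor. destruct n.
  - simpl. rewrite pow_fact_0. apply ns_scal_one.
  - rewrite vsum_shift, vsum_zero, pow_fact_0, ns_scal_one, Nat.sub_0_r; [apply ns_add_zero|].
    intros i _. rewrite pow_fact_at0. apply vscal0.
Qed.

Lemma phi_ext_left n v : v < a -> phi_ext n v = ns_zero.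
Proof. intros H. unfold phi_ext. destruct (Rlt_dec v a); [reflexivity | lra]. Qed.

Lemma phi_ext_mid n v : a <= v <= 0 -> phi_ext n v = Phi (S n) v.
Proof.
  intros H. unfold phi_ext. destruct (Rlt_dec v a); [lra|]. destruct (Rle_dec v 0); [reflexivity | lra].
Qed.

Lemma phi_ext_right n v : a < 0 -> 0 <= v -> phi_ext n v = phi_taylor n v.
Proof.
  intros Ha H. unfold phi_ext. destruct (Rlt_dec v a); [lra|]. destruct (Rle_dec v 0); [|reflexivity].
  replace v with 0 by lra. symmetry. apply phi_taylor_at0.
Qed.

Hypothesis HX : complete X.
Hypothesis Ha : a < 0.
Hypothesis Hphi : is_C2_on (fun s => a <= s <= 0) phi phi' phi''.

Lemma phi_ext_deriv n v : a <= v ->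
  has_deriv_within (fun s => a <= s) (phi_ext (S n)) v (phi_ext n v).
Proof.
  intros Hv. pose proof (phi_prim_deriv a phi phi' phi'' HX Ha Hphi (S n)) as Hd.
  destruct (Rlt_le_dec v 0) as [Hv0|Hv0]; [|destruct (Rle_lt_or_eq_dec _ _ Hv0) as [Hv1|Hv1]].
  - rewrite phi_ext_mid by lra.
    apply (deriv_ext_near _ (Phi (S (S n))) _ _ _ (- v)); try (simpl; lra).
    { intros s Hs Hsv. apply Rabs_def2 in Hsv. rewrite phi_ext_mid; [reflexivity | lra]. }
    apply (deriv_restrict_near (fun s => a <= s <= 0) _ _ _ _ (- v)); try lra.
    { intros s Hs Hsv. apply Rabs_def2 in Hsv. simpl in Hs. lra. }
    apply Hd; lra.
  - rewrite phi_ext_right by lra.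
    apply (deriv_ext_near _ (phi_taylor (S n)) _ _ _ v); try (simpl; lra).
    { intros s Hs Hsv. apply Rabs_def2 in Hsv. rewrite phi_ext_right; [reflexivity | lra | lra]. }
    apply phi_taylor_deriv.
  - subst v. apply deriv_glue.
    + rewrite phi_ext_mid by lra. apply (deriv_ext _ (Phi (S (S n)))).
      { intros s [Hs1 Hs2]. rewrite phi_ext_mid; auto. } simpl; lra.
      apply (deriv_restrict (fun s => a <= s <= 0)). { intros s [H1 H2]; lra. } apply Hd; lra.
    + rewrite phi_ext_right by lra. apply (deriv_ext _ (phi_taylor (S n))).
      { intros s [Hs1 Hs2]. rewrite phi_ext_right; auto. } simpl; lra.
      apply phi_taylor_deriv.
Qed.

Lemma phi_ext_deriv_all n v : (2 <= n)%nat ->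
  has_deriv_within (fun _ => True) (phi_ext (S n)) v (phi_ext n v).
Proof.
  intros Hn.
  destruct (Rlt_le_dec v a) as [Hv|Hv]; [|destruct (Rle_lt_or_eq_dec _ _ Hv) as [Hv1|Hv1]].
  - rewrite phi_ext_left by auto.
    apply (deriv_ext_near _ (fun _ => ns_zero) _ _ _ (a - v)); auto; try lra.
    { intros s _ Hs. apply Rabs_def2 in Hs. rewrite phi_ext_left; auto; lra. }
    apply deriv_const.
  - apply (deriv_restrict_near (fun s => a <= s) _ _ _ _ (v - a)); try lra.
    { intros s _ Hs. apply Rabs_def2 in Hs. lra. }
    apply phi_ext_deriv; lra.
  - subst v. apply deriv_glue.
    + rewrite phi_ext_mid, (phi_prim_start a phi phi' phi'' HX Ha Hphi) by (lra || lia).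
      apply (deriv_ext _ (fun _ => ns_zero)); [|split; auto; lra|apply deriv_const].
      intros s [_ Hs]. destruct (Rle_lt_or_eq_dec _ _ Hs).
      * rewrite phi_ext_left; auto.
      * subst. rewrite phi_ext_mid, (phi_prim_start a phi phi' phi'' HX Ha Hphi); auto; lia || lra.
    + apply (deriv_restrict (fun s => a <= s)). { now intros s [_ H]. } apply phi_ext_deriv; lra.
Qed.

Lemma phi_ext_cont n : continuous_on (fun s => a <= s) (phi_ext n).
Proof.
  apply (cont_glue _ _ 0).
  - apply (cont_ext _ (Phi (S n))). { intros s [H1 H2]. rewrite phi_ext_mid; auto. }
    apply (cont_restrict (fun s => a <= s <= 0)); [intros s [H1 H2]; lra|].
    apply (phi_prim_cont a phi phi' phi'' HX Ha Hphi).
  - apply (cont_ext _ (phi_taylor n)). { intros s [H1 H2]. rewrite phi_ext_right; auto. }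
    apply phi_taylor_cont.
Qed.

Lemma phi_ext_cont_all n : (2 <= n)%nat -> continuous_on (fun _ => True) (phi_ext n).
Proof.
  intros Hn. apply (cont_glue _ _ a).
  - apply (cont_ext _ (fun _ => ns_zero)); [|apply cont_const].
    intros s [_ Hs]. destruct (Rle_lt_or_eq_dec _ _ Hs).
    + rewrite phi_ext_left; auto.
    + subst. rewrite phi_ext_mid, (phi_prim_start a phi phi' phi'' HX Ha Hphi); auto; lia || lra.
  - apply (cont_restrict (fun s => a <= s)). { now intros s [_ H]. } apply phi_ext_cont.
Qed.

End TaylorExtension.

(** * The solution by the method of steps *)

Lemma INR_Z_to_nat (z : Z) : (0 <= z)%Z -> INR (Z.to_nat z) = IZR z.
Proof. intros H. rewrite INR_IZR_INZ, Z2Nat.id; auto. Qed.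

Lemma up_nonneg (x : R) : 0 <= x -> (0 <= up x)%Z.
Proof. intros H. destruct (archimed x) as [H1 _]. apply le_IZR. lra. Qed.

(* Enough terms of the steps series to represent the solution near [t]. *)
Definition nterms (tau t : R) : nat := (Z.to_nat (up (Rabs t / tau)) + 6)%nat.

Lemma nterms_ge (tau t : R) : tau > 0 -> INR (nterms tau t) >= Rabs t / tau + 6.
Proof.
  intros Ht. unfold nterms. rewrite plus_INR.
  assert (H0 : 0 <= Rabs t / tau) by (apply Rmult_le_pos; [apply Rabs_pos | apply Rlt_le, Rinv_0_lt_compat; lra]).
  rewrite INR_Z_to_nat by now apply up_nonneg. destruct (archimed (Rabs t / tau)) as [H1 _].
  simpl. lra.
Qed.

Lemma nterms_near (tau t s : R) : tau > 0 -> Rabs (s - t) < 1 ->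
  INR (nterms tau (Rabs t + 1)) >= Rabs s / tau + 6.
Proof.
  intros Ht Hs. pose proof (nterms_ge tau (Rabs t + 1) Ht) as H.
  rewrite (Rabs_right (Rabs t + 1)) in H by (pose proof (Rabs_pos t); lra).
  assert (Rabs s <= Rabs t + 1).
  { replace s with ((s - t) + t) by ring. eapply Rle_trans. apply Rabs_triang. lra. }
  assert (Rabs s / tau <= (Rabs t + 1) / tau) by (apply Rmult_le_compat_r; auto; apply Rlt_le, Rinv_0_lt_compat; auto).
  lra.
Qed.

Section Solution.
Context {X : NormedSpace}.
Variables (O : X -> X) (tau : R) (phi phi' phi'' : R -> X).
Local Notation Phi := (phi_prim (- (2 * tau)) phi phi' phi'').
Local Notation psi := (phi_ext (- (2 * tau)) phi phi' phi'').

Definition steps_sum (k N : nat) (t : R) : X :=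
  vsum (fun m => opow O (2 * m) (psi (k + 2 * m) (t - 2 * INR m * tau))) N.

Definition xsol (t : R) : X := steps_sum 1 (nterms tau t) t.
Definition xsol' (t : R) : X := steps_sum 0 (nterms tau t) t.

Hypothesis HO : in_LX O.
Hypothesis Htau : tau > 0.

Lemma steps_sum_extend k K N t : (K <= N)%nat -> INR K >= Rabs t / tau + 2 ->
  steps_sum k N t = steps_sum k K t.
Proof.
  intros HKN HK. apply vsum_extend; auto.
  intros i Hi _. rewrite phi_ext_left. apply lin_zero, in_LX_opow, HO.
  assert (INR i >= INR K + 1) by (rewrite <- S_INR; apply Rle_ge, le_INR; lia).
  assert (Hr : Rabs t / tau * tau = Rabs t) by (field; lra).
  pose proof (RRle_abs t). pose proof (Rabs_pos t).
  set (r := Rabs t / tau) in *.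
  assert (0 <= (INR i - (r + 3)) * tau) by (apply Rmult_le_pos; lra).
  nra.
Qed.

Lemma steps_sum_stable k K N t : INR K >= Rabs t / tau + 2 -> INR N >= Rabs t / tau + 2 ->
  steps_sum k N t = steps_sum k K t.
Proof.
  intros HK HN. destruct (Nat.le_ge_cases K N).
  - now apply steps_sum_extend.
  - symmetry. now apply steps_sum_extend.
Qed.

Lemma xsol_steps_sum N t : INR N >= Rabs t / tau + 2 -> xsol t = steps_sum 1 N t.
Proof. intros HN. apply steps_sum_stable; auto. pose proof (nterms_ge tau t Htau). lra. Qed.

Lemma xsol'_steps_sum N t : INR N >= Rabs t / tau + 2 -> xsol' t = steps_sum 0 N t.
Proof. intros HN. apply steps_sum_stable; auto. pose proof (nterms_ge tau t Htau). lra. Qed.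

Hypothesis HX : complete X.
Hypothesis Hphi : is_C2_on (fun s => - (2 * tau) <= s <= 0) phi phi' phi''.

Lemma steps_sum_deriv1 N t : - (2 * tau) <= t ->
  has_deriv_within (fun s => - (2 * tau) <= s) (steps_sum 1 N) t (steps_sum 0 N t).
Proof.
  intros Hta. unfold steps_sum.
  apply (deriv_vsum _ (fun m s => opow O (2 * m) (psi (1 + 2 * m) (s - 2 * INR m * tau)))
           (fun m s => opow O (2 * m) (psi (0 + 2 * m) (s - 2 * INR m * tau)))).
  intros m _. apply deriv_lin. now apply in_LX_opow.
  destruct m as [|m].
  - apply (deriv_shift (fun s => - (2 * tau) <= s)). { intros s Hs. simpl. lra. }
    apply phi_ext_deriv; auto; simpl; lra.
  - apply (deriv_shift (fun _ => True)); auto.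
    apply (deriv_restrict (fun _ => True)); auto.
    replace (1 + 2 * S m)%nat with (S (0 + 2 * S m)) by lia.
    apply phi_ext_deriv_all; auto; lra || lia.
Qed.

Lemma steps_sum_deriv0 N t : 0 <= t ->
  has_deriv_within (fun s => 0 <= s) (steps_sum 0 (S N)) t (O (O (steps_sum 1 N (t - 2 * tau)))).
Proof.
  intros Ht0.
  replace (O (O (steps_sum 1 N (t - 2 * tau)))) with (ns_add ns_zero
    (vsum (fun m => opow O (2 * S m) (psi (1 + 2 * m) (t - 2 * INR (S m) * tau))) N)).
  2:{ rewrite vadd0l. unfold steps_sum. destruct HO as [HL _]. rewrite !lin_vsum by auto.
      apply vsum_ext. intros m _. replace (2 * S m)%nat with (S (S (2 * m))) by lia.
      now replace (t - 2 * INR (S m) * tau) with (t - 2 * tau - 2 * INR m * tau) by (rewrite S_INR; ring). }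
  apply (deriv_ext_all _ (fun s => ns_add (psi 0 s)
    (vsum (fun m => opow O (2 * S m) (psi (2 * S m) (s - 2 * INR (S m) * tau))) N))).
  { intros s. unfold steps_sum. rewrite vsum_shift. simpl. now replace (s - 2 * 0 * tau) with s by ring. }
  apply deriv_add.
  - apply (deriv_ext _ (fun _ => Phi 1 0)); [|simpl; lra|apply deriv_const].
    intros s Hs. rewrite phi_ext_right by lra. unfold phi_taylor. simpl. rewrite pow_fact_0. symmetry. apply ns_scal_one.
  - apply (deriv_vsum _ (fun m s => opow O (2 * S m) (psi (2 * S m) (s - 2 * INR (S m) * tau)))
      (fun m s => opow O (2 * S m) (psi (1 + 2 * m) (s - 2 * INR (S m) * tau)))).
    intros m _. apply deriv_lin. now apply in_LX_opow.
    replace (2 * S m)%nat with (S (1 + 2 * m)) by lia.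
    destruct m as [|m].
    + apply (deriv_shift (fun s => - (2 * tau) <= s)). { intros s Hs. simpl. lra. }
      apply phi_ext_deriv; auto; simpl; lra.
    + apply (deriv_shift (fun _ => True)); auto.
      apply (deriv_restrict (fun _ => True)); auto.
      apply phi_ext_deriv_all; auto; lra || lia.
Qed.

Lemma steps_sum_init k N t : - (2 * tau) <= t <= 0 -> steps_sum k N t = Phi (S k) t.
Proof.
  intros Ht. unfold steps_sum. induction N.
  - simpl. rewrite Nat.add_0_r. replace (t - 2 * 0 * tau) with t by ring. now rewrite phi_ext_mid.
  - cbn [vsum]. rewrite IHN.
    assert (Hz : psi (k + 2 * S N) (t - 2 * INR (S N) * tau) = ns_zero).
    { pose proof (pos_INR N). rewrite S_INR.
      destruct (Rlt_or_le (t - 2 * (INR N + 1) * tau) (- (2 * tau))).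
      - now apply phi_ext_left.
      - replace (t - 2 * (INR N + 1) * tau) with (- (2 * tau)) by nra.
        rewrite phi_ext_mid by lra. apply (phi_prim_start _ _ _ _ HX); auto; lra || lia. }
    rewrite Hz, lin_zero by apply in_LX_opow, HO. apply ns_add_zero.
Qed.

Lemma steps_sum0_cont N : continuous_on (fun s => - (2 * tau) <= s) (steps_sum 0 N).
Proof.
  apply (cont_vsum _ (fun m s => opow O (2 * m) (psi (0 + 2 * m) (s - 2 * INR m * tau)))).
  intros m _. apply cont_lin. now apply in_LX_opow. destruct m as [|m].
  - apply (cont_shift (fun s => - (2 * tau) <= s)). { intros s Hs; simpl; lra. }
    apply phi_ext_cont; auto. lra.
  - apply (cont_shift (fun _ => True)); auto. apply phi_ext_cont_all; auto; lra || lia.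
Qed.

Lemma xsol_deriv t : - (2 * tau) <= t -> has_deriv_within (fun s => - (2 * tau) <= s) xsol t (xsol' t).
Proof.
  intros Hta. set (N := nterms tau (Rabs t + 1)).
  assert (HN : forall s, Rabs (s - t) < 1 -> INR N >= Rabs s / tau + 2)
    by (intros s Hs; pose proof (nterms_near tau t s Htau Hs); unfold N; lra).
  apply (deriv_ext_near _ (steps_sum 1 N) _ _ _ 1); auto; try lra.
  { intros s _ Hs. symmetry. now apply xsol_steps_sum, HN. }
  rewrite (xsol'_steps_sum N t) by (apply HN; rewrite Rminus_diag_eq, Rabs_R0; lra).
  now apply steps_sum_deriv1.
Qed.

Lemma xsol_cont : continuous_on (fun s => - (2 * tau) <= s) xsol.
Proof. apply (cont_of_deriv _ _ xsol'). intros t Hta. now apply xsol_deriv. Qed.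

Lemma xsol'_cont : continuous_on (fun s => - (2 * tau) <= s) xsol'.
Proof.
  apply cont_near. intros t Hta. exists (steps_sum 0 (nterms tau (Rabs t + 1))), 1.
  split. lra. split; [|apply steps_sum0_cont].
  intros s _ Hs. apply xsol'_steps_sum. pose proof (nterms_near tau t s Htau Hs). lra.
Qed.

Lemma xsol'_deriv t : 0 <= t ->
  has_deriv_within (fun s => 0 <= s) xsol' t (O (O (xsol (t - 2 * tau)))).
Proof.
  intros Ht0. set (N := (Z.to_nat (up ((Rabs t + 1) / tau)) + 5)%nat).
  assert (HN : nterms tau (Rabs t + 1) = S N).
  { unfold nterms, N. rewrite (Rabs_right (Rabs t + 1)) by (pose proof (Rabs_pos t); lra). lia. }
  apply (deriv_ext_near _ (steps_sum 0 (S N)) _ _ _ 1); auto; try lra.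
  { intros s _ Hs. symmetry. apply xsol'_steps_sum. pose proof (nterms_near tau t s Htau Hs).
    rewrite HN in *. lra. }
  rewrite (xsol_steps_sum N); [now apply steps_sum_deriv0|].
  pose proof (nterms_near tau t t Htau ltac:(rewrite Rminus_diag_eq, Rabs_R0; lra)) as H.
  rewrite HN, S_INR in H.
  assert (Rabs (t - 2 * tau) <= Rabs t + 2 * tau).
  { unfold Rminus. eapply Rle_trans. apply Rabs_triang. rewrite Rabs_Ropp, (Rabs_right (2 * tau)); lra. }
  assert (Rabs (t - 2 * tau) / tau <= (Rabs t + 2 * tau) / tau)
    by (apply Rmult_le_compat_r; auto; apply Rlt_le, Rinv_0_lt_compat; auto).
  assert ((Rabs t + 2 * tau) / tau = Rabs t / tau + 2) by (field; lra). lra.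
Qed.

Lemma xsol_init t : - (2 * tau) <= t <= 0 -> xsol t = phi t.
Proof. intros. unfold xsol. now rewrite steps_sum_init. Qed.

Lemma xsol'_init t : - (2 * tau) <= t <= 0 -> xsol' t = phi' t.
Proof. intros. unfold xsol'. now rewrite steps_sum_init. Qed.

Lemma xsol_classical : classical_solution tau O (fun _ => ns_zero) phi xsol.
Proof.
  destruct Hphi as [[Hd0 Hc0] [Hd1 Hc1]].
  exists xsol', phi'', (fun t => O (O (xsol (t - 2 * tau)))).
  split; [|split; [|split; [|split]]].
  - split. intros t Ht. now apply xsol_deriv. apply xsol'_cont.
  - split; split.
    + intros t Ht. rewrite xsol'_init by auto. apply (deriv_ext _ phi); auto.
      intros s Hs. symmetry. now apply xsol_init.
    + apply (cont_ext _ phi'); auto. intros s Hs. symmetry. now apply xsol'_init.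
    + intros t Ht. apply (deriv_ext _ phi'); auto. intros s Hs. symmetry. now apply xsol'_init.
    + auto.
  - split; split.
    + intros t Ht. apply (deriv_restrict (fun s => - (2 * tau) <= s)). { intros s Hs. simpl in *; lra. }
      apply xsol_deriv. simpl in Ht; lra.
    + apply (cont_restrict (fun s => - (2 * tau) <= s)). { intros s Hs. simpl in *; lra. }
      apply xsol'_cont.
    + intros t Ht. now apply xsol'_deriv.
    + apply cont_lin; auto. apply cont_lin; auto. apply (cont_shift (fun s => - (2 * tau) <= s)).
      { intros s Hs. simpl in *; lra. } apply xsol_cont.
  - intros t _. apply vsub_self.
  - intros t Ht. now apply xsol_init.
Qed.

End Solution.

(** * Uniqueness *)

Lemma deriv_zero_of_vanishing_left {X : NormedSpace} (D : R -> Prop) (f : R -> X) c v eta :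
  eta > 0 -> (forall s, c - eta <= s <= c -> D s /\ f s = ns_zero) -> has_deriv_within D f c v ->
  v = ns_zero.
Proof.
  intros Heta Hz Hd. apply vnorm_small0. intros e He.
  destruct (Hd e He) as [d [Hd0 Hd']].
  set (h := - (Rmin d eta / 2)).
  pose proof (Rmin_l d eta). pose proof (Rmin_r d eta).
  assert (Hmp : Rmin d eta > 0) by now apply Rmin_glb_lt.
  assert (Hh : h < 0) by (unfold h; lra).
  specialize (Hd' h ltac:(lra) ltac:(rewrite Rabs_left; unfold h; lra) ltac:(apply Hz; unfold h; lra)).
  rewrite (proj2 (Hz (c + h) ltac:(unfold h; lra))), (proj2 (Hz c ltac:(lra))) in Hd'.
  rewrite vsub_self, vsub0l, vnorm_opp, ns_norm_scal in Hd'.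
  assert (Rabs h > 0) by (apply Rabs_pos_lt; lra).
  pose proof (vnorm_nonneg v). nra.
Qed.

Section Uniqueness.
Context {X : NormedSpace}.
Variables (O : X -> X) (tau : R) (x y x' y' x'' y'' : R -> X).
Hypothesis Htau : tau > 0.
Hypothesis Hx' : forall t, - (2 * tau) <= t -> has_deriv_within (fun s => - (2 * tau) <= s) x t (x' t).
Hypothesis Hy' : forall t, - (2 * tau) <= t -> has_deriv_within (fun s => - (2 * tau) <= s) y t (y' t).
Hypothesis Hx'' : forall t, 0 <= t -> has_deriv_within (fun s => 0 <= s) x' t (x'' t).
Hypothesis Hy'' : forall t, 0 <= t -> has_deriv_within (fun s => 0 <= s) y' t (y'' t).
Hypothesis Hxeq : forall t, 0 <= t -> x'' t = O (O (x (t - 2 * tau))).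
Hypothesis Hyeq : forall t, 0 <= t -> y'' t = O (O (y (t - 2 * tau))).

(* One step of length 2τ: on [c, c + 2τ] the delayed terms are already known
   to agree, so y - x has vanishing second derivative there. *)
Lemma solutions_agree_step c : 0 <= c ->
  (forall t, - (2 * tau) <= t <= c -> y t = x t) ->
  forall t, c <= t <= c + 2 * tau -> y t = x t.
Proof.
  intros Hc IH t Ht.
  assert (Hdc : ns_sub (y' c) (x' c) = ns_zero).
  { apply (deriv_zero_of_vanishing_left (fun s => - (2 * tau) <= s) (fun s => ns_sub (y s) (x s)) c _ (2 * tau)).
    lra. intros s Hs. split. lra. rewrite IH. apply vsub_self. lra.
    apply deriv_sub; [apply Hy' | apply Hx']; lra. }
  assert (Hdd : forall r, c <= r <= t -> ns_sub (y' r) (x' r) = ns_zero).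
  { intros r Hr. rewrite <- Hdc.
    apply (const_of_deriv0 (fun s => 0 <= s) (fun s => ns_sub (y' s) (x' s)) (fun s => ns_sub (y'' s) (x'' s))); try lra.
    - intros; simpl; lra.
    - intros r' Hr'. apply deriv_sub; [apply Hy'' | apply Hx'']; lra.
    - intros r' Hr'. rewrite Hyeq, Hxeq, IH by lra. apply vsub_self. }
  apply vsub_eq. transitivity (ns_sub (y c) (x c)). 2: now rewrite IH, vsub_self by lra.
  apply (const_of_deriv0 (fun s => - (2 * tau) <= s) (fun s => ns_sub (y s) (x s)) (fun s => ns_sub (y' s) (x' s))); try lra; auto.
  - intros; simpl; lra.
  - intros r Hr. apply deriv_sub; [apply Hy' | apply Hx']; lra.
Qed.

Lemma solutions_agree : (forall t, - (2 * tau) <= t <= 0 -> y t = x t) ->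
  forall t, - (2 * tau) <= t -> y t = x t.
Proof.
  intros Hinit.
  assert (Hind : forall n t, - (2 * tau) <= t <= 2 * INR n * tau -> y t = x t).
  { induction n as [|n IH]; intros t Ht.
    - apply Hinit. simpl in Ht. lra.
    - pose proof (pos_INR n). rewrite S_INR in Ht.
      destruct (Rle_or_lt t (2 * INR n * tau)). now apply IH.
      apply (solutions_agree_step (2 * INR n * tau)); auto; nra. }
  intros t Hta. destruct (INR_unbounded (t / (2 * tau))) as [n Hn].
  apply (Hind n). split; auto.
  assert (t / (2 * tau) * (2 * tau) = t) by (field; lra).
  assert (0 <= (INR n - t / (2 * tau)) * (2 * tau)) by (apply Rmult_le_pos; lra). nra.
Qed.

End Uniqueness.

Lemma classical_solution_unique {X : NormedSpace} (O : X -> X) (tau : R) (phi x y : R -> X) :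
  tau > 0 ->
  classical_solution tau O (fun _ => ns_zero) phi x -> classical_solution tau O (fun _ => ns_zero) phi y ->
  forall t, - (2 * tau) <= t -> y t = x t.
Proof.
  intros Ht [x' [_ [x'' [[Hx' _] [_ [[_ [Hx'' _]] [Hxeq Hxi]]]]]]]
            [y' [_ [y'' [[Hy' _] [_ [[_ [Hy'' _]] [Hyeq Hyi]]]]]]].
  apply (solutions_agree O tau x y x' y' x'' y''); auto.
  - intros t Hxt. apply vsub_eq, (Hxeq t Hxt).
  - intros t Hyt. apply vsub_eq, (Hyeq t Hyt).
  - intros t Hti. now rewrite Hxi, Hyi.
Qed.

(** * The representation formula *)

(* The coefficient of [A^j] in [exp_tau tau A u], written for all [u >= -tau]. *)
Definition exp_coeff (tau : R) (j : nat) (u : R) : R := pow_fact j (Rmax 0 (u - (INR j - 1) * tau)).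

Lemma exp_coeff_zero tau j u : (1 <= j)%nat -> u - (INR j - 1) * tau <= 0 -> exp_coeff tau j u = 0.
Proof.
  intros Hj Hu. unfold exp_coeff. rewrite Rmax_left by lra. destruct j. lia. apply pow_fact_at0.
Qed.

Lemma exp_coeff_pos tau j u : 0 <= u - (INR j - 1) * tau ->
  exp_coeff tau j u = pow_fact j (u - (INR j - 1) * tau).
Proof. intros H. unfold exp_coeff. now rewrite Rmax_right by lra. Qed.

Section Expansions.
Context {X : NormedSpace}.
Variables (tau : R) (u : R) (v : X).
Hypothesis Htau : tau > 0.

Lemma exp_tau_expand (A : X -> X) N : - tau <= u -> (0 <= u -> INR N >= u / tau + 1) ->
  exp_tau tau A u v = vsum (fun j => ns_scal (exp_coeff tau j u) (opow A j v)) N.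
Proof.
  intros Hu HN. unfold exp_tau. destruct (Rlt_dec u (- tau)). lra.
  destruct (Rlt_dec u 0) as [Hu0|Hu0].
  - rewrite (vsum_extend _ 0); [simpl|lia|].
    2:{ intros i Hi _. rewrite exp_coeff_zero; [apply vscal0|lia|].
        assert (1 <= INR i) by (apply (le_INR 1); lia). nra. }
    unfold exp_coeff. rewrite pow_fact_0. symmetry. apply ns_scal_one.
  - specialize (HN ltac:(lra)).
    assert (Hup0 : (0 <= up (u / tau))%Z).
    { apply up_nonneg, Rmult_le_pos. lra. apply Rlt_le, Rinv_0_lt_compat; lra. }
    destruct (archimed (u / tau)) as [Ha1 Ha2].
    set (k := Z.to_nat (up (u / tau))).
    assert (Hk : INR k = IZR (up (u / tau))) by now apply INR_Z_to_nat.
    assert (Hut : u / tau * tau = u) by (field; lra).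
    assert (HkN : (k <= N)%nat) by (apply INR_le; lra).
    rewrite (vsum_extend _ k N); auto.
    + apply vsum_ext. intros j Hj. rewrite exp_coeff_pos. reflexivity.
      assert (INR j <= INR k) by now apply le_INR.
      assert (0 <= (u / tau + 1 - INR j) * tau) by (apply Rmult_le_pos; lra). nra.
    + intros i Hi _. rewrite exp_coeff_zero. apply vscal0. lia.
      assert (INR i >= INR k + 1) by (rewrite <- S_INR; apply Rle_ge, le_INR; lia).
      assert (0 <= (INR i - 1 - u / tau) * tau) by (apply Rmult_le_pos; lra). nra.
Qed.

(* x1 and x2 keep the even, respectively odd, powers of Ω. *)
Lemma x1_expand (O : X -> X) M : in_LX O -> - tau <= u -> (0 <= u -> INR (S (2 * M)) >= u / tau + 1) ->
  x1 tau O u v = vsum (fun m => ns_scal (exp_coeff tau (2 * m) u) (opow O (2 * m) v)) M.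
Proof.
  intros [HO _] Hu HN. unfold x1.
  rewrite (exp_tau_expand O (S (2 * M))), (exp_tau_expand _ (S (2 * M))) by auto.
  rewrite <- vsum_add, <- vsum_scal, vsum_pairs.
  apply vsum_ext. intros m _. rewrite !opow_opp, pow_1_even, pow_1_odd by auto. vfield.
Qed.

Lemma x2_expand (O Oinv : X -> X) M : in_LX O -> in_LX Oinv -> (forall w, Oinv (O w) = w) ->
  (0 <= u -> INR (S (2 * M)) >= u / tau + 1) ->
  x2 tau O Oinv u v = vsum (fun m => ns_scal (exp_coeff tau (S (2 * m)) u) (opow O (2 * m) v)) M.
Proof.
  intros [HO _] [HOi _] Hinv HN. unfold x2.
  destruct (Rlt_dec u (- tau)) as [Hu|Hu].
  - unfold exp_tau. destruct (Rlt_dec u (- tau)); [|lra]. rewrite vsub_self, lin_zero, vscal0r by auto.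
    symmetry. apply vsum_zero. intros m _. rewrite exp_coeff_zero. apply vscal0. lia.
    rewrite S_INR, mult_INR. simpl (INR 2). pose proof (pos_INR m). nra.
  - rewrite (exp_tau_expand O (S (2 * M))), (exp_tau_expand _ (S (2 * M))) by (auto; lra).
    rewrite <- vsum_sub, lin_vsum, <- vsum_scal, vsum_pairs by auto.
    apply vsum_ext. intros m _. rewrite !opow_opp, pow_1_even, pow_1_odd by auto.
    rewrite !(lin_sub Oinv), !(lin_scal Oinv) by auto.
    change (opow O (S (2 * m)) v) with (O (opow O (2 * m) v)). rewrite Hinv.
    vfield.
Qed.

End Expansions.

Section TaylorRemainder.
Context {X : NormedSpace}.
Variables (a : R) (phi phi' phi'' : R -> X).
Local Notation Phi := (phi_prim a phi phi' phi'').
Local Notation psi := (phi_ext a phi phi' phi'').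

Definition taylor_sum (n : nat) (v s : R) : X :=
  vsum (fun k => ns_scal (pow_fact k (v - s)) (Phi (S n - k) s)) n.

Definition taylor_prim (n : nat) (v s : R) : X :=
  vsum (fun k => ns_scal (pow_fact k (Rmax 0 (v - s))) (Phi (S n - k) (Rmin s v))) n.

Lemma taylor_prim_le n v s : s <= v -> taylor_prim n v s = taylor_sum n v s.
Proof. intros H. unfold taylor_prim, taylor_sum. now rewrite Rmax_right, Rmin_left by lra. Qed.

Lemma taylor_prim_ge n v s : v <= s -> taylor_prim n v s = Phi (S n) v.
Proof.
  intros H. unfold taylor_prim. rewrite Rmax_left, Rmin_right by lra.
  destruct n.
  - simpl. rewrite pow_fact_0. apply ns_scal_one.
  - rewrite vsum_shift, vsum_zero, pow_fact_0, ns_scal_one, Nat.sub_0_r; [apply ns_add_zero|].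
    intros i _. rewrite pow_fact_at0. apply vscal0.
Qed.

Hypothesis HX : complete X.
Hypothesis Ha : a < 0.
Hypothesis Hphi : is_C2_on (fun s => a <= s <= 0) phi phi' phi''.

(* The derivative telescopes. *)
Lemma taylor_sum_deriv n v s : a <= s <= 0 ->
  has_deriv_within (fun s => a <= s <= 0) (taylor_sum (S n) v) s
    (ns_scal (pow_fact (S n) (v - s)) (phi'' s)).
Proof.
  intros Hs.
  set (dp := fun k => match k with O => 0 | S j => - pow_fact j (v - s) end).
  replace (ns_scal (pow_fact (S n) (v - s)) (phi'' s)) with
    (vsum (fun k => ns_add (ns_scal (dp k) (Phi (S (S n) - k) s))
                           (ns_scal (pow_fact k (v - s)) (Phi (S n - k) s))) (S n)).
  - apply (deriv_vsum _ (fun k s => ns_scal (pow_fact k (v - s)) (Phi (S (S n) - k) s))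
      (fun k s => ns_add (ns_scal (dp k) (Phi (S (S n) - k) s)) (ns_scal (pow_fact k (v - s)) (Phi (S n - k) s)))).
    intros k Hk. apply (deriv_prod _ (fun s => pow_fact k (v - s))). exact (pow_fact_refl_deriv k v s).
    rewrite (Nat.sub_succ_l k (S n)) by auto. apply (phi_prim_deriv a phi phi' phi'' HX Ha Hphi); auto.
  - rewrite vsum_add, vsum_shift, vsum_succ, Nat.sub_diag.
    replace (vsum (fun i => ns_scal (dp (S i)) (Phi (S (S n) - S i) s)) n) with
      (ns_opp (vsum (fun k => ns_scal (pow_fact k (v - s)) (Phi (S n - k) s)) n)).
    + simpl dp. change (Phi 0 s) with (phi'' s). rewrite vscal0, vadd0l. vring.
    + rewrite vopp_scal, <- vsum_scal. apply vsum_ext. intros i _. simpl dp.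
      rewrite ns_scal_assoc. f_equal. ring.
Qed.

Lemma taylor_prim_deriv n v s : a <= s <= 0 ->
  has_deriv_within (fun s => a <= s <= 0) (taylor_prim (S n) v) s
    (ns_scal (pow_fact (S n) (Rmax 0 (v - s))) (phi'' s)).
Proof.
  intros Hs.
  destruct (Rlt_or_le s v) as [Hsv|Hsv]; [|destruct (Rle_lt_or_eq_dec _ _ Hsv) as [Hsv'| ->]].
  - rewrite Rmax_right by lra. apply (deriv_ext_near _ (taylor_sum (S n) v) _ _ _ (v - s)); try lra.
    { intros s' _ Hs'. apply Rabs_def2 in Hs'. symmetry. apply taylor_prim_le. lra. }
    now apply taylor_sum_deriv.
  - rewrite Rmax_left, pow_fact_at0, vscal0 by lra.
    apply (deriv_ext_near _ (fun _ => Phi (S (S n)) v) _ _ _ (s - v)); try lra.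
    { intros s' _ Hs'. apply Rabs_def2 in Hs'. symmetry. apply taylor_prim_ge. lra. }
    apply deriv_const.
  - apply deriv_glue.
    + apply (deriv_ext _ (taylor_sum (S n) s)); [| simpl; lra |].
      { intros s' [_ Hs']. symmetry. now apply taylor_prim_le. }
      rewrite Rmax_right by lra.
      apply (deriv_restrict (fun s => a <= s <= 0)). { now intros s' [H _]. } now apply taylor_sum_deriv.
    + rewrite Rminus_diag_eq, Rmax_left, pow_fact_at0, vscal0 by lra.
      apply (deriv_ext _ (fun _ => Phi (S (S n)) s)); [| simpl; lra | apply deriv_const].
      intros s' [_ Hs']. symmetry. now apply taylor_prim_ge.
Qed.

(* Taylor's formula with integral remainder: the increment of [taylor_prim]
   over [a, 0] (using [Phi k a = 0] for [k >= 3]). *)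
Lemma taylor_prim_increment n v : (a <= v \/ (1 <= n)%nat) ->
  ns_sub (taylor_prim (S n) v 0) (taylor_prim (S n) v a) =
  ns_sub (psi (S n) v)
    (ns_add (ns_scal (pow_fact n (Rmax 0 (v - a))) (phi a))
            (ns_scal (pow_fact (S n) (Rmax 0 (v - a))) (phi' a))).
Proof.
  intros Hv. destruct (Rlt_or_le v a) as [Hva|Hva].
  - destruct Hv as [Hv|Hv]. lra.
    rewrite !taylor_prim_ge, phi_ext_left, Rmax_left by lra.
    destruct n. lia. rewrite !pow_fact_at0, !vscal0, vsub_self, ns_add_zero, vsub_self. reflexivity.
  - rewrite Rmax_right by lra. f_equal.
    + destruct (Rlt_or_le v 0) as [Hv0|Hv0].
      * rewrite taylor_prim_ge, phi_ext_mid by lra. reflexivity.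
      * rewrite taylor_prim_le, phi_ext_right by lra. unfold taylor_sum, phi_taylor.
        now rewrite Rminus_0_r.
    + rewrite taylor_prim_le by auto. unfold taylor_sum. cbn [vsum]. f_equal.
      * destruct n as [|n]; [reflexivity|]. cbn [vsum]. rewrite vsum_zero, vadd0l.
        { now replace (S (S (S n)) - S n)%nat with 2%nat by lia. }
        intros i Hi. rewrite (phi_prim_start a phi phi' phi'' HX Ha Hphi) by lia. apply vscal0r.
      * now replace (S (S n) - S n)%nat with 1%nat by lia.
Qed.

End TaylorRemainder.

Lemma continuity_pt_pos_part (c s : R) : continuity_pt (fun s => Rmax 0 (c - s)) s.
Proof.
  intros e He. exists e. split; auto. intros x [_ Hx]. simpl in *. unfold R_dist in *.
  apply Rabs_def2 in Hx. apply Rabs_def1; unfold Rmax;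
    destruct (Rle_dec 0 (c - x)), (Rle_dec 0 (c - s)); lra.
Qed.

Section Representation.
Context {X : NormedSpace}.
Variables (O Oinv : X -> X) (tau : R) (phi phi' phi'' : R -> X).
Local Notation a := (- (2 * tau)).
Hypothesis HO : in_LX O.
Hypothesis HOinv : in_LX Oinv.
Hypothesis HOinvO : forall w, Oinv (O w) = w.
Hypothesis Htau : tau > 0.
Hypothesis HX : complete X.
Hypothesis Hphi : is_C2_on (fun s => a <= s <= 0) phi phi' phi''.

Definition integrand_term (t : R) (m : nat) (s : R) : X :=
  opow O (2 * m) (ns_scal (pow_fact (S (2 * m)) (Rmax 0 (t - 2 * INR m * tau - s))) (phi'' s)).

(* For [M] large, a primitive of s ↦ x2(t - s) φ''(s) on [a, 0]. *)
Definition integrand_prim (M : nat) (t s : R) : X :=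
  vsum (fun m => opow O (2 * m) (taylor_prim a phi phi' phi'' (S (2 * m)) (t - 2 * INR m * tau) s)) M.

Lemma Rabs_div_ge (t : R) : Rabs t / tau >= t / tau.
Proof. apply Rle_ge, Rmult_le_compat_r. apply Rlt_le, Rinv_0_lt_compat; auto. apply RRle_abs. Qed.

Lemma x2_integrand_expand M t s : INR M >= Rabs t / tau + 3 -> a <= s <= 0 ->
  x2 tau O Oinv (t - s) (phi'' s) = vsum (fun m => integrand_term t m s) M.
Proof.
  intros HM Hs. rewrite (x2_expand tau (t - s) (phi'' s) Htau O Oinv M); auto.
  - apply vsum_ext. intros m _. unfold integrand_term. rewrite lin_scal by now apply in_LX_opow.
    unfold exp_coeff.
    now replace (t - s - (INR (S (2 * m)) - 1) * tau) with (t - 2 * INR m * tau - s)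
      by (rewrite S_INR, mult_INR; simpl (INR 2); ring).
  - intros _. pose proof (Rabs_div_ge t).
    assert ((t - s) / tau <= t / tau + 2).
    { replace (t / tau + 2) with ((t + 2 * tau) / tau) by (field; lra).
      apply Rmult_le_compat_r. apply Rlt_le, Rinv_0_lt_compat; auto. lra. }
    assert (INR M <= INR (S (2 * M))) by (apply le_INR; lia). lra.
Qed.

Lemma integrand_prim_deriv M t s : INR M >= Rabs t / tau + 3 -> a <= s <= 0 ->
  has_deriv_within (fun s => a <= s <= 0) (integrand_prim M t) s (x2 tau O Oinv (t - s) (phi'' s)).
Proof.
  intros HM Hs. rewrite (x2_integrand_expand M) by auto.
  apply (deriv_vsum _ (fun m s => opow O (2 * m) (taylor_prim a phi phi' phi'' (S (2 * m)) (t - 2 * INR m * tau) s))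
    (integrand_term t)).
  intros m _. unfold integrand_term. apply deriv_lin. now apply in_LX_opow.
  apply taylor_prim_deriv; auto; lra.
Qed.

Lemma integrand_cont M t : INR M >= Rabs t / tau + 3 ->
  continuous_on (fun s => a <= s <= 0) (fun s => x2 tau O Oinv (t - s) (phi'' s)).
Proof.
  intros HM. apply (cont_ext _ (fun s => vsum (fun m => integrand_term t m s) M)).
  { intros s Hs. symmetry. now apply x2_integrand_expand. }
  apply cont_vsum. intros m _. unfold integrand_term. apply cont_lin. now apply in_LX_opow.
  apply cont_prod.
  - intros s _. apply (continuity_pt_comp (fun s => Rmax 0 (t - 2 * INR m * tau - s))).
    apply continuity_pt_pos_part. apply pow_fact_continuity.
  - apply Hphi.
Qed.

Lemma integrand_prim_increment M t : a <= t -> INR M >= Rabs t / tau + 3 ->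
  ns_sub (integrand_prim M t 0) (integrand_prim M t a) =
  ns_sub (ns_sub (xsol O tau phi phi' phi'' t) (x1 tau O (t + tau) (phi a)))
         (x2 tau O Oinv (t + 2 * tau) (phi' a)).
Proof.
  intros Hta HM. pose proof (Rabs_div_ge t).
  assert (HM2 : INR M <= INR (S (2 * M))) by (apply le_INR; lia).
  rewrite (xsol_steps_sum O tau phi phi' phi'' HO Htau M t) by lra.
  rewrite (x1_expand tau (t + tau) (phi a) Htau O M) by
    (auto; try lra; intros; replace ((t + tau) / tau) with (t / tau + 1) by (field; lra); lra).
  rewrite (x2_expand tau (t + 2 * tau) (phi' a) Htau O Oinv M) by
    (auto; intros; replace ((t + 2 * tau) / tau) with (t / tau + 2) by (field; lra); lra).
  unfold integrand_prim, steps_sum. rewrite <- !vsum_sub. apply vsum_ext. intros m _.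
  pose proof (in_LX_opow O (2 * m) HO) as [HL _].
  rewrite <- lin_sub, taylor_prim_increment by (auto; lra || (destruct m; [left; simpl; lra | right; lia])).
  rewrite lin_sub, lin_add, !lin_scal by auto. unfold exp_coeff.
  replace (t + tau - (INR (2 * m) - 1) * tau) with (t - 2 * INR m * tau - a)
    by (rewrite mult_INR; simpl (INR 2); ring).
  replace (t + 2 * tau - (INR (S (2 * m)) - 1) * tau) with (t - 2 * INR m * tau - a)
    by (rewrite S_INR, mult_INR; simpl (INR 2); ring).
  unfold ns_sub. now rewrite vopp_add, ns_add_assoc.
Qed.

Lemma representation_formula t : a <= t ->
  is_RInt (fun s => x2 tau O Oinv (t - s) (phi'' s)) a 0
    (ns_sub (ns_sub (xsol O tau phi phi' phi'' t) (x1 tau O (t + tau) (phi a)))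
            (x2 tau O Oinv (t + 2 * tau) (phi' a))).
Proof.
  intros Hta. set (M := nterms tau t).
  assert (HM : INR M >= Rabs t / tau + 3) by (pose proof (nterms_ge tau t Htau); unfold M; lra).
  rewrite <- (integrand_prim_increment M) by auto.
  apply is_RInt_deriv; [lra| |now apply (integrand_cont M)].
  intros s Hs. now apply integrand_prim_deriv.
Qed.

End Representation.

Theorem mainTheorem5 (X : NormedSpace) (HX : complete X)
  (O Oinv : X -> X) (HO : is_isomorphism O Oinv)
  (tau : R) (Htau : tau > 0)
  (phi phi' phi'' : R -> X)
  (Hphi : is_C2_on (fun t => - (2 * tau) <= t <= 0) phi phi' phi'') :
  exists x : R -> X,
    classical_solution tau O (fun _ => ns_zero) phi x /\
    (forall y : R -> X, classical_solution tau O (fun _ => ns_zero) phi y ->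
       forall t, - (2 * tau) <= t -> y t = x t) /\
    (forall t, - (2 * tau) <= t ->
       is_RInt (fun s => x2 tau O Oinv (t - s) (phi'' s)) (- (2 * tau)) 0
         (ns_sub (ns_sub (x t) (x1 tau O (t + tau) (phi (- (2 * tau)))))
                 (x2 tau O Oinv (t + 2 * tau) (phi' (- (2 * tau)))))).
Proof.
  destruct HO as [HO [HOinv [HOinvO _]]].
  pose proof (xsol_classical O tau phi phi' phi'' HO Htau HX Hphi) as Hx.
  exists (xsol O tau phi phi' phi''). split; [exact Hx | split].
  - intros y Hy. now apply (classical_solution_unique O tau phi).
  - intros t Ht. now apply representation_formula.
Qed.
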